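(* The self-adjoint map $\psi_h^{[DB]^2} \equiv e^{\frac{h}{2}\hat{T}}\,\psi_{h/2}^{\dagger W}\,\psi_{h/2}^{W}\,e^{\frac{h}{2}\hat{T}}$ (the integrator of Hernandez \& Bertschinger) has error Hamiltonian $H_{\mathrm{err}}^{[DB]^2} = \frac{h^2}{48}\{\{T,V\},V\}_3 + \mathcal{O}(h^4)$, and the map $\psi_h^{[BD]^2} \equiv \psi_{h/2}^{W}\,e^{h\hat{T}}\,\psi_{h/2}^{\dagger W}$ has $H_{\mathrm{err}}^{[BD]^2} = H_{\mathrm{err}}^{[DB]^2} + \mathcal{O}(h^4)$. In particular, all $\mathcal{O}(h^2)$ error terms arising from close two-body encounters, i.e. $\{\{V,T\},T\}$ and $\{\{T,V\},V\}_2$, are absent; the order in which the binary kicks are applied does not affect the error Hamiltonian at order $h^2$.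
   Context: Consider the gravitational $N$-body Hamiltonian $H=T+V$ with $T=\sum_i \vec{p}_i^2/(2m_i)$, $V=\sum_{i<j}V_{ij}$, $V_{ij}=-Gm_im_j/|\vec{x}_i-\vec{x}_j|$. For a phase-space function $A$, $\hat{A}$ denotes its Lie operator $\hat{A}w=\{w,A\}$ ($\{,\}$ the Poisson bracket), so $e^{h\hat{A}}$ is the exact time-$h$ flow of $A$. A composite symplectic map evolves the system exactly under a surrogate Hamiltonian $\tilde{H}=H+H_{\mathrm{err}}(h)$ (obtained via the Campbell–Baker–Hausdorff formula). The binary Hamiltonian of pair $(i,j)$ is $H_{ij}=T_i+T_j+V_{ij}$ with $T_i=\vec{p}_i^2/(2m_i)$; a binary kick is the map $e^{h\hat{H}_{ij}}e^{-h(\hat{T}_i+\hat{T}_j)}$ (exact Kepler two-body flow followed by a backward drift of the two particles). $\psi_h^{W}=\prod_{(i,j)} e^{h\hat{H}_{ij}}e^{-h(\hat{T}_i+\hat{T}_j)}$ is the product of binary kicks over all $N(N-1)/2$ particle pairs in some fixed order, and $\psi_h^{\dagger W}$ is its adjoint (same kicks in reversed order). The nested-bracket terms are split as $\{\{T,V\},V\}=\{\{T,V\},V\}_2+\{\{T,V\},V\}_3$, where $\{\{T,V\},V\}_2\equiv\sum_{i<j}\{\{T,V_{ij}\},V_{ij}\}$ (two-body-encounter terms, each equal to $G^2m_im_j(m_i+m_j)/r_{ij}^4$) and $\{\{T,V\},V\}_3\equiv 2\sum_{i<j<k}\big(\{\{T,V_{ij}\},V_{ik}\}+\{\{T,V_{jk}\},V_{ji}\}+\{\{T,V_{ki}\},V_{kj}\}\big)$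 (three-body-encounter terms, with $\{\{T,V_{ij}\},V_{ik}\}=G^2m_im_jm_k\,\vec{x}_{ij}\cdot\vec{x}_{ik}/(r_{ij}^3r_{ik}^3)$, $\vec{x}_{ij}=\vec{x}_i-\vec{x}_j$, $r_{ij}=|\vec{x}_{ij}|$). *)

From Stdlib Require Import Reals List Arith Permutation.
From Coquelicot Require Import Coquelicot.
Import ListNotations.
Open Scope R_scope.

(* Phase-space coordinates: x i a, p i a for particle i, Cartesian component a < 3. *)
Definition Coord := nat -> nat -> R.
Definition Fun := Coord -> Coord -> R.

Definition sumR (n : nat) (f : nat -> R) : R :=
  fold_right Rplus 0 (map f (seq 0 n)).

Definition upd (x : Coord) (i a : nat) (t : R) : Coord :=
  fun j b => if andb (Nat.eqb j i) (Nat.eqb b a) then t else x j b.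

Definition dX (f : Fun) (i a : nat) : Fun :=
  fun x p => Derive (fun t => f (upd x i a t) p) (x i a).
Definition dP (f : Fun) (i a : nat) : Fun :=
  fun x p => Derive (fun t => f x (upd p i a t)) (p i a).

Definition poisson (N : nat) (f g : Fun) : Fun :=
  fun x p => sumR N (fun i => sumR 3 (fun a =>
     dX f i a x p * dP g i a x p - dP f i a x p * dX g i a x p)).

Definition addF (f g : Fun) : Fun := fun x p => f x p + g x p.
Definition scaleF (c : R) (f : Fun) : Fun := fun x p => c * f x p.
Definition zeroF : Fun := fun _ _ => 0.

Definition Ti (m : nat -> R) (i : nat) : Fun :=
  fun x p => sumR 3 (fun a => p i a ^ 2) / (2 * m i).
Definition Vij (G : R) (m : nat -> R) (i j : nat) : Fun :=
  fun x p => - G * m i * m j / sqrt (sumR 3 (fun a => (x i a - x j a) ^ 2)).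
Definition Tkin (N : nat) (m : nat -> R) : Fun :=
  fun x p => sumR N (fun i => Ti m i x p).
Definition Vpot (N : nat) (G : R) (m : nat -> R) : Fun :=
  fun x p => sumR N (fun i => sumR N (fun j =>
     if Nat.ltb i j then Vij G m i j x p else 0)).
Definition Hij (G : R) (m : nat -> R) (i j : nat) : Fun :=
  addF (addF (Ti m i) (Ti m j)) (Vij G m i j).

Definition TVV3 (N : nat) (G : R) (m : nat -> R) : Fun :=
  let T := Tkin N m in
  let br := poisson N in
  fun x p => 2 * sumR N (fun i => sumR N (fun j => sumR N (fun k =>
    if andb (Nat.ltb i j) (Nat.ltb j k) then
        br (br T (Vij G m i j)) (Vij G m i k) x p
      + br (br T (Vij G m j k)) (Vij G m j i) x p
      + br (br T (Vij G m k i)) (Vij G m k j) x p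
    else 0))).

(* Lie series in h, truncated after order h^4: a series S represents
   sum_{k=1..4} h^k S k  (a Lie-operator exponent e^{hat S}); coefficients
   for k = 0 or k > 4 are ignored/zero.  Everything of order h^5 and higher
   is dropped, so this is the Lie algebra (generated in h-degree >= 1)
   modulo h^5, which is nilpotent: the BCH formula below, truncated at
   word length 4, is exact there. *)
Definition Ser := nat -> Fun.

Definition zeroS : Ser := fun _ => zeroF.
Definition addS (A B : Ser) : Ser := fun k => addF (A k) (B k).
Definition scaleS (c : R) (A : Ser) : Ser := fun k => scaleF c (A k).

(* Commutator of Lie operators: [hat F, hat G] = hat {G, F}. *)
Definition opbr (N : nat) (F G : Fun) : Fun := poisson N G F.

Definition brS (N : nat) (A B : Ser) : Ser :=
  fun k => if Nat.leb k 4 then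
    fun x p => sumR k (fun a => opbr N (A a) (B (k - a)%nat) x p
                                 * (if Nat.ltb 0 a then 1 else 0))
  else zeroF.
(* note: terms with a = 0 or k - a = 0 use A 0 / B 0, which are multiplied by 0
   (a = 0) or are coefficients of h^0; generators have zero h^0 part. *)

Definition bch (N : nat) (X Y : Ser) : Ser :=
  let b := brS N in
  addS (addS X Y)
   (addS (scaleS (1/2) (b X Y))
    (addS (scaleS (1/12) (b X (b X Y)))
     (addS (scaleS (-1/12) (b Y (b X Y)))
           (scaleS (-1/24) (b Y (b X (b X Y))))))).

(* Lie series of the exact time-(c h) flow of F : e^{c h hat F}. *)
Definition gen (c : R) (F : Fun) : Ser :=
  fun k => if Nat.eqb k 1 then scaleF c F else zeroF.

(* Exponent (log) of the product e^{A_1} e^{A_2} ... e^{A_n} of Lie operators. *)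
Definition logProd (N : nat) (l : list Ser) : Ser :=
  fold_left (bch N) l zeroS.

Definition kick (G : R) (m : nat -> R) (c : R) (ij : nat * nat) : list Ser :=
  [gen c (Hij G m (fst ij) (snd ij)); gen (- c) (addF (Ti m (fst ij)) (Ti m (snd ij)))].

Definition psiW (G : R) (m : nat -> R) (c : R) (ord : list (nat * nat)) : list Ser :=
  flat_map (kick G m c) ord.
(* its adjoint psi^{dagger W}_{c h} = (psi^W_{-c h})^{-1}: the same factors in
   reversed order (kicks reversed, each kick's two factors reversed). *)
Definition psiWdag (G : R) (m : nat -> R) (c : R) (ord : list (nat * nat)) : list Ser :=
  rev (psiW G m c ord).

Definition allPairs (N : nat) : list (nat * nat) :=
  flat_map (fun j => map (fun i => (i, j)) (seq 0 j)) (seq 0 N).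

Definition DB2 (N : nat) (G : R) (m : nat -> R) (ord : list (nat * nat)) : list Ser :=
  [gen (1/2) (Tkin N m)] ++ psiWdag G m (1/2) ord ++ psiW G m (1/2) ord
  ++ [gen (1/2) (Tkin N m)].

Definition BD2 (N : nat) (G : R) (m : nat -> R) (ord : list (nat * nat)) : list Ser :=
  psiW G m (1/2) ord ++ [gen 1 (Tkin N m)] ++ psiWdag G m (1/2) ord.

(* h * (H + h^2/48 {{T,V},V}_3): the claimed exponent h*H~ up to O(h^5) *)
Definition target (N : nat) (G : R) (m : nat -> R) : Ser :=
  fun k => if Nat.eqb k 1 then addF (Tkin N m) (Vpot N G m)
           else if Nat.eqb k 3 then scaleF (1/48) (TVV3 N G m)
           else zeroF.

Definition noCollision (N : nat) (x : Coord) : Prop :=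
  forall i j, (i < N)%nat -> (j < N)%nat -> i <> j ->
    exists a, (a < 3)%nat /\ x i a <> x j a.

From Stdlib Require Import Reals List Arith Permutation Lra Lia FunctionalExtensionality.
From Coquelicot Require Import Coquelicot.
Import ListNotations.
Open Scope R_scope.

(* Every factor of the two integrators is the exact flow of a phase-space function, so the
   logarithm of the composite map is an iterated Baker-Campbell-Hausdorff series; all
   generators are O(h), so truncated after h^4 it is exact modulo h^5.  Conjugating a middle
   factor exp(h (K + Vs) + h^3 M3), with K = 0 or K = T and Vs a sum of pair potentials, by a
   binary kick of the pair b adds h V_b to the first-order part (the kinetic parts of the kick
   cancel) and adds to M3 a combination of {{T_b,V_b},V_a} for the pairs a in Vs, of
   {{T_b,V_b},V_b} and of {{V_b,T_b},T_b}.  Since V_b commutes with the kinetic energy of the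
   other particles, T_b may be replaced by T, and W(a,b) = {{T,V_b},V_a} is symmetric and
   vanishes for disjoint pairs.  Summing over the kicks (and, for [DB]^2, adding the leapfrog
   terms of the outer drifts) the diagonal terms W(b,b) and {{V_b,T_b},T_b} cancel whatever the
   kick order, leaving (1/48) sum_{a<>b} W(a,b) = (1/48) {{T,V},V}_3. *)

Lemma is_derive_val (f : R -> R) (x l l' : R) : is_derive f x l -> l = l' -> is_derive f x l'.
Proof. now intros H <-. Qed.

Lemma is_derive_Rconst (c x : R) : is_derive (fun _ => c) x 0.
Proof. apply (is_derive_const c x). Qed.

Lemma is_derive_Rid (x : R) : is_derive (fun t => t) x 1.
Proof. apply (is_derive_id x). Qed.

Lemma is_derive_Rplus (f g : R -> R) (x a b : R) :
  is_derive f x a -> is_derive g x b -> is_derive (fun t => f t + g t) x (a + b).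
Proof. intros; now apply (is_derive_plus f g x a b). Qed.

Lemma is_derive_Rminus (f g : R -> R) (x a b : R) :
  is_derive f x a -> is_derive g x b -> is_derive (fun t => f t - g t) x (a - b).
Proof. intros; now apply (is_derive_minus f g x a b). Qed.

Lemma is_derive_Rmult (f g : R -> R) (x a b : R) :
  is_derive f x a -> is_derive g x b -> is_derive (fun t => f t * g t) x (a * g x + f x * b).
Proof. intros Ha Hb. apply (is_derive_mult f g x a b Ha Hb). intros; apply Rmult_comm. Qed.

Lemma is_derive_Rsqr (g : R -> R) (x d : R) :
  is_derive g x d -> is_derive (fun t => g t ^ 2) x (2 * g x * d).
Proof.
  intros H. eapply is_derive_val; [apply (is_derive_pow g 2 x d H)|]. simpl; ring.
Qed.

Lemma Derive_const_fun (f : R -> R) c t0 : (forall t, f t = c) -> Derive f t0 = 0.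
Proof. intros H. rewrite (Derive_ext f (fun _ => c)) by auto. apply Derive_const. Qed.

Lemma sumR_S n f : sumR (S n) f = sumR n f + f n.
Proof.
  unfold sumR. rewrite seq_S, map_app, fold_right_app. simpl.
  generalize (f n). induction (map f (seq 0 n)); intros; simpl; [ring|].
  rewrite IHl. ring.
Qed.

Lemma sumR_ext n f g : (forall i, (i < n)%nat -> f i = g i) -> sumR n f = sumR n g.
Proof. induction n; intros H; [reflexivity|]. rewrite !sumR_S, IHn, H; auto. Qed.

Lemma sumR_plus n f g : sumR n (fun i => f i + g i) = sumR n f + sumR n g.
Proof. induction n; [unfold sumR; simpl; ring|]. rewrite !sumR_S, IHn. ring. Qed.

Lemma sumR_scal n c f : sumR n (fun i => c * f i) = c * sumR n f.
Proof. induction n; [unfold sumR; simpl; ring|]. rewrite !sumR_S, IHn. ring. Qed.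

Lemma sumR_zero n f : (forall i, (i < n)%nat -> f i = 0) -> sumR n f = 0.
Proof.
  intros H. rewrite (sumR_ext n f (fun _ => 0)) by auto. clear H.
  induction n; [reflexivity|]. rewrite sumR_S, IHn. ring.
Qed.

Lemma sumR_swap n m F :
  sumR n (fun i => sumR m (fun j => F i j)) = sumR m (fun j => sumR n (fun i => F i j)).
Proof.
  induction n; [symmetry; apply sumR_zero; auto|].
  rewrite sumR_S, IHn, <- sumR_plus. apply sumR_ext. intros; now rewrite sumR_S.
Qed.

Lemma sumR_single n i c : (i < n)%nat -> sumR n (fun k => if Nat.eqb k i then c else 0) = c.
Proof.
  induction n; intros H; [lia|]. rewrite sumR_S. destruct (Nat.eq_dec i n) as [->|Hn].
  - rewrite Nat.eqb_refl, sumR_zero; [ring|].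
    intros k Hk. destruct (Nat.eqb_spec k n); [lia|auto].
  - rewrite IHn by lia. destruct (Nat.eqb_spec n i); [lia|ring].
Qed.

Lemma sumR_two n i j f : (i < n)%nat -> (j < n)%nat -> i <> j ->
  (forall k, (k < n)%nat -> k <> i -> k <> j -> f k = 0) -> sumR n f = f i + f j.
Proof.
  intros Hi Hj Hij H.
  rewrite (sumR_ext n f (fun k => (if Nat.eqb k i then f i else 0) + (if Nat.eqb k j then f j else 0))).
  - rewrite sumR_plus, !sumR_single; auto.
  - intros k Hk. destruct (Nat.eqb_spec k i), (Nat.eqb_spec k j); subst; try lia; try ring.
    rewrite H by auto. ring.
Qed.

Lemma sumR_square n F : sumR n (fun i => sumR n (fun k => F i k)) =
  sumR n (fun k => F k k + sumR k (fun i => F i k + F k i)).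
Proof.
  induction n; [reflexivity|].
  rewrite (sumR_ext (S n) _ (fun i => sumR n (fun k => F i k) + F i n)) by (intros; apply sumR_S).
  rewrite sumR_plus, !sumR_S, <- IHn, sumR_plus.
  change (sumR n (F n)) with (sumR n (fun k => F n k)). ring.
Qed.

Lemma sumR_ltb_trunc n j h : (j <= n)%nat ->
  sumR n (fun i => if Nat.ltb i j then h i else 0) = sumR j h.
Proof.
  induction n; intros Hj.
  - now replace j with 0%nat by lia.
  - destruct (Nat.eq_dec j (S n)) as [->|Hn].
    + rewrite !sumR_S, (proj2 (Nat.ltb_lt n (S n))) by lia. f_equal.
      apply sumR_ext; intros i Hi. now rewrite (proj2 (Nat.ltb_lt i (S n))) by lia.
    + rewrite sumR_S, IHn, (proj2 (Nat.ltb_ge n j)) by lia. ring.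
Qed.

Lemma is_derive_sumR n (F : nat -> R -> R) x (d : nat -> R) :
  (forall i, (i < n)%nat -> is_derive (F i) x (d i)) ->
  is_derive (fun t => sumR n (fun i => F i t)) x (sumR n d).
Proof.
  induction n; intros H.
  - exact (is_derive_Rconst 0 x).
  - rewrite sumR_S. apply (is_derive_ext (fun t => sumR n (fun i => F i t) + F n t)).
    { intro t. now rewrite sumR_S. }
    apply is_derive_Rplus; [apply IHn; intros; apply H|apply H]; lia.
Qed.

Definition lsum {A : Type} (l : list A) (f : A -> R) : R :=
  fold_right (fun a acc => f a + acc) 0 l.

Lemma lsum_app {A} (l1 l2 : list A) f : lsum (l1 ++ l2) f = lsum l1 f + lsum l2 f.
Proof. induction l1; simpl; [ring|]. rewrite IHl1. ring. Qed.

Lemma lsum_perm {A} (l1 l2 : list A) f : Permutation l1 l2 -> lsum l1 f = lsum l2 f.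
Proof. induction 1; simpl; try ring; congruence. Qed.

Lemma lsum_ext {A} (l : list A) f g : (forall a, In a l -> f a = g a) -> lsum l f = lsum l g.
Proof. induction l; simpl; intros H; [reflexivity|]. rewrite H, IHl; auto. Qed.

Lemma lsum_plus {A} (l : list A) f g : lsum l (fun a => f a + g a) = lsum l f + lsum l g.
Proof. induction l; simpl; [ring|]. rewrite IHl. ring. Qed.

Lemma lsum_scal {A} (l : list A) c f : lsum l (fun a => c * f a) = c * lsum l f.
Proof. induction l; simpl; [ring|]. rewrite IHl. ring. Qed.

(** * Symbolic derivatives *)

(* Every phase-space function used below agrees, away from collisions, with a
   rational expression in the coordinates and the inverse distances; on such
   expressions the derivatives are computed symbolically. *)
Inductive Expr : Type :=
| Cst (r : R) | Xc (i a : nat) | Pc (i a : nat) | InvDist (i j : nat)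
| EAdd (e1 e2 : Expr) | EMul (e1 e2 : Expr).

Definition dist2 (x : Coord) i j := sumR 3 (fun a => (x i a - x j a) ^ 2).

Fixpoint ev (e : Expr) : Fun := fun x p =>
  match e with
  | Cst r => r
  | Xc i a => x i a
  | Pc i a => p i a
  | InvDist i j => / sqrt (dist2 x i j)
  | EAdd e1 e2 => ev e1 x p + ev e2 x p
  | EMul e1 e2 => ev e1 x p * ev e2 x p
  end.

Inductive Dir := DX (k b : nat) | DP (k b : nat).

Definition kron (k i : nat) : R := if Nat.eqb k i then 1 else 0.
Definition kron2 (k i b a : nat) : R := if andb (Nat.eqb k i) (Nat.eqb b a) then 1 else 0.

Fixpoint dexpr (d : Dir) (e : Expr) : Expr :=
  match e with
  | Cst _ => Cst 0
  | Xc i a => match d with DX k b => Cst (kron2 k i b a) | DP _ _ => Cst 0 end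
  | Pc i a => match d with DP k b => Cst (kron2 k i b a) | DX _ _ => Cst 0 end
  | InvDist i j =>
      match d with
      | DX k b =>
          if Nat.ltb b 3 then
            EMul (Cst (kron k i - kron k j))
              (EMul (EAdd (Xc j b) (EMul (Cst (-1)) (Xc i b)))
                 (EMul (InvDist i j) (EMul (InvDist i j) (InvDist i j))))
          else Cst 0
      | DP _ _ => Cst 0
      end
  | EAdd e1 e2 => EAdd (dexpr d e1) (dexpr d e2)
  | EMul e1 e2 => EAdd (EMul (dexpr d e1) e2) (EMul e1 (dexpr d e2))
  end.

Fixpoint wf_expr (N : nat) (e : Expr) : Prop :=
  match e with
  | InvDist i j => (i < N)%nat /\ (j < N)%nat /\ i <> j
  | EAdd a b | EMul a b => wf_expr N a /\ wf_expr N b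
  | _ => True
  end.

Lemma wf_dexpr N d e : wf_expr N e -> wf_expr N (dexpr d e).
Proof.
  induction e; simpl; intros H; try exact I.
  - destruct d; exact I.
  - destruct d; exact I.
  - destruct d; [destruct (Nat.ltb b 3)|]; simpl; tauto.
  - tauto.
  - tauto.
Qed.

Definition along (f : Fun) (d : Dir) (x p : Coord) (t : R) : R :=
  match d with DX k b => f (upd x k b t) p | DP k b => f x (upd p k b t) end.

Definition coord_of (d : Dir) (x p : Coord) : R :=
  match d with DX k b => x k b | DP k b => p k b end.

Lemma upd_same (x : Coord) k b : upd x k b (x k b) = x.
Proof.
  apply functional_extensionality; intro j; apply functional_extensionality; intro c.
  unfold upd. destruct (Nat.eqb_spec j k), (Nat.eqb_spec c b); subst; simpl; auto.
Qed.

Lemma upd_other (x : Coord) k a t i b : i <> k -> upd x k a t i b = x i b.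
Proof. intros H. unfold upd. destruct (Nat.eqb_spec i k); [lia|reflexivity]. Qed.

Lemma along_coord_of f d x p : along f d x p (coord_of d x p) = f x p.
Proof. destruct d; simpl; now rewrite upd_same. Qed.

Lemma dist2_pos N x i j : noCollision N x -> (i < N)%nat -> (j < N)%nat -> i <> j ->
  0 < dist2 x i j.
Proof.
  intros H Hi Hj Hij. destruct (H i j Hi Hj Hij) as [a [Ha Hd]].
  unfold dist2, sumR; simpl.
  assert (0 <= (x i 0%nat - x j 0%nat) ^ 2) by apply pow2_ge_0.
  assert (0 <= (x i 1%nat - x j 1%nat) ^ 2) by apply pow2_ge_0.
  assert (0 <= (x i 2%nat - x j 2%nat) ^ 2) by apply pow2_ge_0.
  assert (0 < (x i a - x j a) ^ 2) by (rewrite <- Rsqr_pow2; apply Rsqr_pos_lt; lra).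
  destruct a as [|[|[|a]]]; try lia; lra.
Qed.

Lemma is_derive_upd x k b i a :
  is_derive (fun t => upd x k b t i a) (x k b) (kron2 k i b a).
Proof.
  unfold upd, kron2. rewrite (Nat.eqb_sym k i), (Nat.eqb_sym b a).
  destruct (andb (Nat.eqb i k) (Nat.eqb a b)); [apply is_derive_Rid|apply is_derive_Rconst].
Qed.

Lemma is_derive_inv_dist N x p i j k b : noCollision N x ->
  (i < N)%nat -> (j < N)%nat -> i <> j ->
  is_derive (fun t => / sqrt (dist2 (upd x k b t) i j)) (x k b)
    (ev (dexpr (DX k b) (InvDist i j)) x p).
Proof.
  intros HU Hi Hj Hij.
  pose proof (dist2_pos N x i j HU Hi Hj Hij) as Hr.
  set (g := fun t => dist2 (upd x k b t) i j).
  set (dg := sumR 3 (fun a => 2 * (x i a - x j a) * (kron2 k i b a - kron2 k j b a))).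
  assert (Hg : is_derive g (x k b) dg).
  { apply is_derive_sumR. intros a Ha.
    eapply is_derive_val; [apply is_derive_Rsqr, is_derive_Rminus; apply is_derive_upd|].
    cbv beta. now rewrite upd_same. }
  assert (Hg0 : g (x k b) = dist2 x i j) by (unfold g; now rewrite upd_same).
  assert (Hsq : 0 < sqrt (dist2 x i j)) by (apply sqrt_lt_R0; exact Hr).
  assert (Hss : sqrt (dist2 x i j) * sqrt (dist2 x i j) = dist2 x i j) by (apply sqrt_sqrt; lra).
  eapply is_derive_val.
  { apply (is_derive_inv (fun t => sqrt (g t))); [apply is_derive_sqrt; [exact Hg|]|];
      rewrite Hg0; lra. }
  rewrite Hg0. unfold dg, sumR; simpl.
  set (s := sqrt (dist2 x i j)) in *.
  destruct (Nat.ltb_spec b 3) as [Hb|Hb].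
  - destruct b as [|[|[|b]]]; try lia; unfold kron2, kron; simpl; rewrite ?Nat.eqb_refl; simpl;
      destruct (Nat.eqb k i), (Nat.eqb k j); simpl; unfold s in *;
      match goal with |- ?a = ?b => change (@eq R a b) end; field; lra.
  - unfold kron2. destruct (Nat.eqb_spec b 0), (Nat.eqb_spec b 1), (Nat.eqb_spec b 2); try lia.
    rewrite !Bool.andb_false_r. simpl. unfold s in *.
    match goal with |- ?a = ?b => change (@eq R a b) end; field; lra.
Qed.

Lemma dexpr_is_derive N x p e d : wf_expr N e -> noCollision N x ->
  is_derive (along (ev e) d x p) (coord_of d x p) (ev (dexpr d e) x p).
Proof.
  intros Hw HU. induction e; simpl in Hw.
  - destruct d; apply is_derive_Rconst.
  - destruct d; [apply is_derive_upd|apply is_derive_Rconst].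
  - destruct d; [apply is_derive_Rconst|apply is_derive_upd].
  - destruct d as [k b|k b].
    + destruct Hw as [Hi [Hj Hij]]. exact (is_derive_inv_dist N x p i j k b HU Hi Hj Hij).
    + apply is_derive_Rconst.
  - destruct Hw as [H1 H2].
    apply (is_derive_ext (fun t => along (ev e1) d x p t + along (ev e2) d x p t)).
    { intro t; now destruct d. }
    apply is_derive_Rplus; auto.
  - destruct Hw as [H1 H2].
    apply (is_derive_ext (fun t => along (ev e1) d x p t * along (ev e2) d x p t)).
    { intro t; now destruct d. }
    eapply is_derive_val; [apply is_derive_Rmult; auto|].
    now rewrite !along_coord_of.
Qed.

Lemma dexpr_comm e d1 d2 x p : ev (dexpr d1 (dexpr d2 e)) x p = ev (dexpr d2 (dexpr d1 e)) x p.
Proof.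
  induction e; simpl.
  - reflexivity.
  - now destruct d1, d2.
  - now destruct d1, d2.
  - destruct d1 as [k1 b1|k1 b1], d2 as [k2 b2|k2 b2]; simpl; try ring.
    + destruct (Nat.ltb b1 3) eqn:E1; destruct (Nat.ltb b2 3) eqn:E2; simpl; rewrite ?E1, ?E2;
        simpl; try ring; unfold kron2, kron;
        destruct (Nat.eqb_spec b1 b2) as [->|Hn]; rewrite ?Nat.eqb_refl;
        try rewrite (proj2 (Nat.eqb_neq b1 b2) Hn); try rewrite (proj2 (Nat.eqb_neq b2 b1)) by auto;
        destruct (Nat.eqb k1 i), (Nat.eqb k1 j), (Nat.eqb k2 i), (Nat.eqb k2 j); simpl;
        first [ring | congruence].
    + destruct (Nat.ltb b1 3) eqn:F1; simpl; rewrite ?F1; simpl; ring.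
    + destruct (Nat.ltb b2 3) eqn:F2; simpl; rewrite ?F2; simpl; ring.
  - now rewrite IHe1, IHe2.
  - rewrite IHe1, IHe2. ring.
Qed.

(** * The Poisson bracket of expressions and the Jacobi identity *)

Definition phase_sum (N : nat) (F : nat -> nat -> R) : R :=
  sumR N (fun i => sumR 3 (fun a => F i a)).

Lemma phase_sum_ext N F G : (forall i a, F i a = G i a) -> phase_sum N F = phase_sum N G.
Proof. intros H. apply sumR_ext; intros; apply sumR_ext; intros; apply H. Qed.

Lemma phase_sum_zero N F : (forall i a, F i a = 0) -> phase_sum N F = 0.
Proof. intros H. apply sumR_zero; intros; apply sumR_zero; intros; apply H. Qed.

Lemma phase_sum_plus N F G :
  phase_sum N (fun i a => F i a + G i a) = phase_sum N F + phase_sum N G.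
Proof. unfold phase_sum. rewrite <- sumR_plus. apply sumR_ext; intros. apply sumR_plus. Qed.

Lemma phase_sum_scal N c F : phase_sum N (fun i a => c * F i a) = c * phase_sum N F.
Proof. unfold phase_sum. rewrite <- sumR_scal. apply sumR_ext; intros. apply sumR_scal. Qed.

Lemma phase_sum_lin N A B F G :
  A * phase_sum N F - B * phase_sum N G = phase_sum N (fun i a => A * F i a - B * G i a).
Proof.
  replace (A * phase_sum N F - B * phase_sum N G)
    with (phase_sum N (fun i a => A * F i a) + phase_sum N (fun i a => - B * G i a))
    by (rewrite !phase_sum_scal; ring).
  rewrite <- phase_sum_plus. apply phase_sum_ext; intros; ring.
Qed.

Lemma phase_sum_swap N H :
  phase_sum N (fun i a => phase_sum N (fun j b => H i a j b))
  = phase_sum N (fun j b => phase_sum N (fun i a => H i a j b)).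
Proof.
  unfold phase_sum.
  transitivity (sumR N (fun i => sumR N (fun j => sumR 3 (fun a => sumR 3 (fun b => H i a j b))))).
  { apply sumR_ext; intros i _. apply (sumR_swap 3 N (fun a j => sumR 3 (fun b => H i a j b))). }
  rewrite sumR_swap. apply sumR_ext; intros j _.
  transitivity (sumR N (fun i => sumR 3 (fun b => sumR 3 (fun a => H i a j b)))).
  { apply sumR_ext; intros i _. apply sumR_swap. }
  apply sumR_swap.
Qed.

Definition sum_expr (n : nat) (f : nat -> Expr) : Expr :=
  fold_right EAdd (Cst 0) (map f (seq 0 n)).

Lemma ev_sum_expr n f x p : ev (sum_expr n f) x p = sumR n (fun i => ev (f i) x p).
Proof.
  unfold sum_expr, sumR. generalize 0%nat.
  induction n; intros s; [reflexivity|]. simpl. now rewrite IHn.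
Qed.

Lemma dexpr_sum_expr d n f : dexpr d (sum_expr n f) = sum_expr n (fun i => dexpr d (f i)).
Proof. unfold sum_expr. induction (seq 0 n); simpl; [reflexivity|]. now rewrite IHl. Qed.

Lemma wf_sum_expr N n f : (forall i, (i < n)%nat -> wf_expr N (f i)) -> wf_expr N (sum_expr n f).
Proof.
  unfold sum_expr. intros H. assert (Hs : forall i, In i (seq 0 n) -> wf_expr N (f i)).
  { intros i Hi. apply in_seq in Hi. apply H. lia. }
  induction (seq 0 n); simpl; [exact I|].
  split; [apply Hs; left; auto|apply IHl; intros; apply Hs; right; auto].
Qed.

Definition pb_expr (N : nat) (e1 e2 : Expr) : Expr :=
  sum_expr N (fun i => sum_expr 3 (fun a =>
    EAdd (EMul (dexpr (DX i a) e1) (dexpr (DP i a) e2))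
         (EMul (Cst (-1)) (EMul (dexpr (DP i a) e1) (dexpr (DX i a) e2))))).

Lemma wf_pb_expr N a b : wf_expr N a -> wf_expr N b -> wf_expr N (pb_expr N a b).
Proof.
  intros. apply wf_sum_expr; intros. apply wf_sum_expr; intros.
  simpl. repeat split; try apply wf_dexpr; auto.
Qed.

Section ExprJacobi.
Variables (N : nat) (x p : Coord).

Let dv d e := ev (dexpr d e) x p.
Let d2v d d' e := ev (dexpr d (dexpr d' e)) x p.

Lemma ev_pb_expr a b : ev (pb_expr N a b) x p =
  phase_sum N (fun i al => dv (DX i al) a * dv (DP i al) b - dv (DP i al) a * dv (DX i al) b).
Proof.
  unfold pb_expr. rewrite ev_sum_expr. apply sumR_ext; intros. rewrite ev_sum_expr.
  apply sumR_ext; intros. simpl. unfold dv. ring.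
Qed.

Lemma ev_dexpr_pb_expr u b c : ev (dexpr u (pb_expr N b c)) x p =
  phase_sum N (fun j be =>
     d2v u (DX j be) b * dv (DP j be) c + dv (DX j be) b * d2v u (DP j be) c
   - (d2v u (DP j be) b * dv (DX j be) c + dv (DP j be) b * d2v u (DX j be) c)).
Proof.
  unfold pb_expr. rewrite dexpr_sum_expr, ev_sum_expr. apply sumR_ext; intros.
  rewrite dexpr_sum_expr, ev_sum_expr. apply sumR_ext; intros. simpl. unfold dv, d2v. ring.
Qed.

(* {a,{b,c}} splits into the terms with a second derivative of c and those with a
   second derivative of b; by symmetry of second derivatives the former cancel
   against the latter of the cyclically shifted bracket. *)
Let second_c a b c i al j be :=
  dv (DX i al) a * (dv (DX j be) b * d2v (DP i al) (DP j be) c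
                    - dv (DP j be) b * d2v (DP i al) (DX j be) c)
  - dv (DP i al) a * (dv (DX j be) b * d2v (DX i al) (DP j be) c
                      - dv (DP j be) b * d2v (DX i al) (DX j be) c).
Let second_b a b c i al j be :=
  dv (DX i al) a * (d2v (DP i al) (DX j be) b * dv (DP j be) c
                    - d2v (DP i al) (DP j be) b * dv (DX j be) c)
  - dv (DP i al) a * (d2v (DX i al) (DX j be) b * dv (DP j be) c
                      - d2v (DX i al) (DP j be) b * dv (DX j be) c).

Lemma ev_pb_expr_pb_expr a b c : ev (pb_expr N a (pb_expr N b c)) x p =
  phase_sum N (fun i al => phase_sum N (fun j be => second_c a b c i al j be))
  + phase_sum N (fun i al => phase_sum N (fun j be => second_b a b c i al j be)).
Proof.
  rewrite <- phase_sum_plus, ev_pb_expr. apply phase_sum_ext; intros i al.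
  rewrite <- phase_sum_plus. unfold dv at 2 4. rewrite !ev_dexpr_pb_expr, phase_sum_lin.
  apply phase_sum_ext; intros j be. unfold second_c, second_b. ring.
Qed.

Lemma second_c_b_cancel a b c :
  phase_sum N (fun i al => phase_sum N (fun j be => second_c a b c i al j be))
  + phase_sum N (fun i al => phase_sum N (fun j be => second_b b c a i al j be)) = 0.
Proof.
  rewrite (phase_sum_swap N (fun i al j be => second_b b c a i al j be)), <- phase_sum_plus.
  apply phase_sum_zero; intros i al. rewrite <- phase_sum_plus.
  apply phase_sum_zero; intros j be. unfold second_c, second_b, d2v.
  rewrite (dexpr_comm c (DP j be) (DX i al)), (dexpr_comm c (DP j be) (DP i al)),
    (dexpr_comm c (DX j be) (DX i al)), (dexpr_comm c (DX j be) (DP i al)).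
  ring.
Qed.

Lemma pb_expr_jacobi a b c :
  ev (pb_expr N a (pb_expr N b c)) x p + ev (pb_expr N b (pb_expr N c a)) x p
  + ev (pb_expr N c (pb_expr N a b)) x p = 0.
Proof.
  rewrite !ev_pb_expr_pb_expr.
  pose proof (second_c_b_cancel a b c). pose proof (second_c_b_cancel b c a).
  pose proof (second_c_b_cancel c a b). lra.
Qed.

End ExprJacobi.

Lemma noCollision_of_dist2 N x :
  (forall i j, (i < N)%nat -> (j < N)%nat -> i <> j -> 0 < dist2 x i j) -> noCollision N x.
Proof.
  intros H i j Hi Hj Hij. specialize (H i j Hi Hj Hij).
  destruct (Req_dec (x i 0%nat) (x j 0%nat)) as [E0|E0]; [|exists 0%nat; split; [lia|auto]].
  destruct (Req_dec (x i 1%nat) (x j 1%nat)) as [E1|E1]; [|exists 1%nat; split; [lia|auto]].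
  destruct (Req_dec (x i 2%nat) (x j 2%nat)) as [E2|E2]; [|exists 2%nat; split; [lia|auto]].
  exfalso. unfold dist2, sumR in H. simpl in H. rewrite E0, E1, E2 in H. lra.
Qed.

Lemma locally_pos (f : R -> R) t0 : ex_derive f t0 -> 0 < f t0 -> locally t0 (fun t => 0 < f t).
Proof.
  intros Hd Hp. assert (Hc : continuity_pt f t0).
  { apply continuity_pt_filterlim. apply (ex_derive_continuous f t0 Hd). }
  apply continuity_pt_locally with (eps := mkposreal _ Hp) in Hc.
  eapply filter_imp; [|exact Hc]. simpl. intros t Ht. apply Rabs_def2 in Ht. lra.
Qed.

Lemma locally_forall_lt n (P : nat -> R -> Prop) t0 :
  (forall i, (i < n)%nat -> locally t0 (P i)) ->
  locally t0 (fun t => forall i, (i < n)%nat -> P i t).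
Proof.
  induction n; intros H.
  - apply filter_forall. intros; lia.
  - eapply filter_imp; [|apply filter_and; [apply IHn; intros; apply H; lia|apply (H n); lia]].
    intros t [H1 H2] i Hi. destruct (Nat.eq_dec i n); [subst; auto|apply H1; lia].
Qed.

Lemma noCollision_locally N x k b : noCollision N x ->
  locally (x k b) (fun t => noCollision N (upd x k b t)).
Proof.
  intros HU.
  eapply filter_imp;
    [intros t Ht; apply noCollision_of_dist2; intros i j Hi Hj Hij; exact (Ht i Hi j Hj Hij)|].
  apply locally_forall_lt; intros i Hi. apply locally_forall_lt; intros j Hj.
  destruct (Nat.eq_dec i j) as [->|Hij].
  - apply filter_forall. intros t Hc; congruence.
  - eapply filter_imp; [intros t Ht _; exact Ht|].
    apply (locally_pos (fun t => dist2 (upd x k b t) i j)).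
    + eexists. apply is_derive_sumR. intros a Ha.
      apply is_derive_Rsqr, is_derive_Rminus; apply is_derive_upd.
    + rewrite upd_same. apply (dist2_pos N x i j HU Hi Hj Hij).
Qed.

Definition agree (N : nat) (f g : Fun) := forall x p, noCollision N x -> f x p = g x p.

Lemma agree_refl N f : agree N f f.
Proof. now intros x p _. Qed.

Lemma agree_sym N f g : agree N f g -> agree N g f.
Proof. intros H x p HU; symmetry; auto. Qed.

Lemma agree_trans N f g h : agree N f g -> agree N g h -> agree N f h.
Proof. intros H1 H2 x p HU; rewrite H1, H2; auto. Qed.

(* The collision-free set is open, so derivatives at its points only see values on it. *)
Lemma dX_agree N f g k b x p : noCollision N x -> agree N f g -> dX f k b x p = dX g k b x p.
Proof.
  intros HU H. unfold dX. apply Derive_ext_loc.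
  eapply filter_imp; [|apply (noCollision_locally N x k b HU)]. intros t Ht. apply H; auto.
Qed.

Lemma dP_agree N f g k b x p : noCollision N x -> agree N f g -> dP f k b x p = dP g k b x p.
Proof. intros HU H. unfold dP. apply Derive_ext. intros t. apply H; auto. Qed.

Lemma poisson_agree N f f' g g' :
  agree N f f' -> agree N g g' -> agree N (poisson N f g) (poisson N f' g').
Proof.
  intros Hf Hg x p HU. unfold poisson. apply sumR_ext; intros i _. apply sumR_ext; intros a _.
  rewrite (dX_agree N f f'), (dP_agree N f f'), (dX_agree N g g'), (dP_agree N g g'); auto.
Qed.

Lemma opbr_agree N f f' g g' : agree N f f' -> agree N g g' -> agree N (opbr N f g) (opbr N f' g').
Proof. intros; now apply poisson_agree. Qed.

Definition Smooth (N : nat) (f : Fun) := exists e, wf_expr N e /\ agree N f (ev e).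

Lemma dX_ev N f e k b x p : wf_expr N e -> agree N f (ev e) -> noCollision N x ->
  dX f k b x p = ev (dexpr (DX k b) e) x p.
Proof.
  intros Hw Hf HU. rewrite (dX_agree N f (ev e)); auto.
  apply is_derive_unique. exact (dexpr_is_derive N x p e (DX k b) Hw HU).
Qed.

Lemma dP_ev N f e k b x p : wf_expr N e -> agree N f (ev e) -> noCollision N x ->
  dP f k b x p = ev (dexpr (DP k b) e) x p.
Proof.
  intros Hw Hf HU. rewrite (dP_agree N f (ev e)); auto.
  apply is_derive_unique. exact (dexpr_is_derive N x p e (DP k b) Hw HU).
Qed.

Lemma poisson_ev N f g ef eg : wf_expr N ef -> wf_expr N eg ->
  agree N f (ev ef) -> agree N g (ev eg) -> agree N (poisson N f g) (ev (pb_expr N ef eg)).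
Proof.
  intros Hwf Hwg Hf Hg x p HU. rewrite ev_pb_expr. apply phase_sum_ext; intros i a.
  rewrite (dX_ev N f ef), (dP_ev N f ef), (dX_ev N g eg), (dP_ev N g eg); auto.
Qed.

Lemma smooth_poisson N f g : Smooth N f -> Smooth N g -> Smooth N (poisson N f g).
Proof.
  intros [ef [Hwf Hf]] [eg [Hwg Hg]]. exists (pb_expr N ef eg).
  split; [now apply wf_pb_expr|now apply poisson_ev].
Qed.

Lemma smooth_opbr N f g : Smooth N f -> Smooth N g -> Smooth N (opbr N f g).
Proof. intros; now apply smooth_poisson. Qed.

Lemma smooth_add N f g : Smooth N f -> Smooth N g -> Smooth N (addF f g).
Proof.
  intros [ef [Hwf Hf]] [eg [Hwg Hg]]. exists (EAdd ef eg). split; [now split|].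
  intros x p HU. unfold addF. simpl. rewrite Hf, Hg; auto.
Qed.

Lemma smooth_scale N c f : Smooth N f -> Smooth N (scaleF c f).
Proof.
  intros [ef [Hwf Hf]]. exists (EMul (Cst c) ef). split; [now split|].
  intros x p HU. unfold scaleF. simpl. rewrite Hf; auto.
Qed.

Lemma smooth_zero N : Smooth N zeroF.
Proof. exists (Cst 0). split; [exact I|]. now intros x p _. Qed.

Lemma smooth_agree N f g : agree N f g -> Smooth N g -> Smooth N f.
Proof. intros H [e [Hw He]]. exists e. split; auto. intros x p HU. rewrite H, He; auto. Qed.

Lemma smooth_ext N f g : (forall x p, f x p = g x p) -> Smooth N g -> Smooth N f.
Proof. intros H; apply smooth_agree; intros x p _; auto. Qed.

Lemma smooth_sumR N n (F : nat -> Fun) : (forall i, (i < n)%nat -> Smooth N (F i)) ->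
  Smooth N (fun x p => sumR n (fun i => F i x p)).
Proof.
  induction n; intros H.
  - apply (smooth_ext N _ zeroF); [reflexivity|apply smooth_zero].
  - apply (smooth_ext N _ (addF (fun x p => sumR n (fun i => F i x p)) (F n))).
    + intros x p. unfold addF. now rewrite sumR_S.
    + apply smooth_add; [apply IHn; intros; apply H; lia|apply H; lia].
Qed.

Definition lsumF {A : Type} (l : list A) (g : A -> Fun) : Fun := fun x p => lsum l (fun a => g a x p).

Lemma smooth_lsumF {A} N (l : list A) (g : A -> Fun) : (forall a, In a l -> Smooth N (g a)) ->
  Smooth N (lsumF l g).
Proof.
  induction l as [|a l IH]; intros H.
  - apply (smooth_ext N _ zeroF); [reflexivity|apply smooth_zero].
  - apply (smooth_ext N _ (addF (g a) (lsumF l g))); [reflexivity|].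
    apply smooth_add; [apply H; left; auto|apply IH; intros; apply H; right; auto].
Qed.

Section PoissonAlgebra.
Variable N : nat.

Lemma poisson_phase_sum f g x p : poisson N f g x p =
  phase_sum N (fun i a => dX f i a x p * dP g i a x p - dP f i a x p * dX g i a x p).
Proof. reflexivity. Qed.

Lemma dX_add f g k b x p : Smooth N f -> Smooth N g -> noCollision N x ->
  dX (addF f g) k b x p = dX f k b x p + dX g k b x p.
Proof.
  intros [ef [Hwf Hf]] [eg [Hwg Hg]] HU.
  rewrite (dX_ev N _ (EAdd ef eg)), (dX_ev N f ef), (dX_ev N g eg); auto.
  - now split.
  - intros y q Hy. unfold addF. simpl. rewrite Hf, Hg; auto.
Qed.

Lemma dP_add f g k b x p : Smooth N f -> Smooth N g -> noCollision N x ->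
  dP (addF f g) k b x p = dP f k b x p + dP g k b x p.
Proof.
  intros [ef [Hwf Hf]] [eg [Hwg Hg]] HU.
  rewrite (dP_ev N _ (EAdd ef eg)), (dP_ev N f ef), (dP_ev N g eg); auto.
  - now split.
  - intros y q Hy. unfold addF. simpl. rewrite Hf, Hg; auto.
Qed.

Lemma dX_scale c f k b x p : dX (scaleF c f) k b x p = c * dX f k b x p.
Proof. apply Derive_scal. Qed.

Lemma dP_scale c f k b x p : dP (scaleF c f) k b x p = c * dP f k b x p.
Proof. apply Derive_scal. Qed.

Lemma poisson_addl f g h : Smooth N f -> Smooth N g ->
  agree N (poisson N (addF f g) h) (addF (poisson N f h) (poisson N g h)).
Proof.
  intros Hf Hg x p HU. unfold addF at 2. rewrite !poisson_phase_sum.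
  rewrite <- phase_sum_plus. apply phase_sum_ext; intros i a.
  rewrite dX_add, dP_add; auto. ring.
Qed.

Lemma poisson_addr f g h : Smooth N f -> Smooth N g ->
  agree N (poisson N h (addF f g)) (addF (poisson N h f) (poisson N h g)).
Proof.
  intros Hf Hg x p HU. unfold addF at 2. rewrite !poisson_phase_sum.
  rewrite <- phase_sum_plus. apply phase_sum_ext; intros i a.
  rewrite dX_add, dP_add; auto. ring.
Qed.

Lemma poisson_scalel c f h x p : poisson N (scaleF c f) h x p = c * poisson N f h x p.
Proof.
  rewrite !poisson_phase_sum. rewrite <- phase_sum_scal.
  apply phase_sum_ext; intros i a. rewrite dX_scale, dP_scale. ring.
Qed.

Lemma poisson_scaler c f h x p : poisson N h (scaleF c f) x p = c * poisson N h f x p.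
Proof.
  rewrite !poisson_phase_sum. rewrite <- phase_sum_scal.
  apply phase_sum_ext; intros i a. rewrite dX_scale, dP_scale. ring.
Qed.

Lemma poisson_zerol h x p : poisson N zeroF h x p = 0.
Proof.
  apply phase_sum_zero; intros i a. unfold dX, dP, zeroF. rewrite !Derive_const. ring.
Qed.

Lemma poisson_zeror h x p : poisson N h zeroF x p = 0.
Proof.
  apply phase_sum_zero; intros i a. unfold dX, dP, zeroF. rewrite !Derive_const. ring.
Qed.

Lemma poisson_anti f g x p : poisson N f g x p = - poisson N g f x p.
Proof.
  rewrite !poisson_phase_sum. replace (- _) with (-1 * phase_sum N (fun i a =>
    dX g i a x p * dP f i a x p - dP g i a x p * dX f i a x p)) by ring.
  rewrite <- phase_sum_scal. apply phase_sum_ext; intros i a. ring.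
Qed.

Lemma poisson_self f x p : poisson N f f x p = 0.
Proof. pose proof (poisson_anti f f x p). lra. Qed.

Lemma poisson_jacobi f g h : Smooth N f -> Smooth N g -> Smooth N h ->
  forall x p, noCollision N x ->
  poisson N f (poisson N g h) x p + poisson N g (poisson N h f) x p
  + poisson N h (poisson N f g) x p = 0.
Proof.
  intros [ef [Hwf Hf]] [eg [Hwg Hg]] [eh [Hwh Hh]] x p HU.
  rewrite (poisson_ev N f (poisson N g h) ef (pb_expr N eg eh)),
    (poisson_ev N g (poisson N h f) eg (pb_expr N eh ef)),
    (poisson_ev N h (poisson N f g) eh (pb_expr N ef eg)); auto using wf_pb_expr, poisson_ev.
  apply pb_expr_jacobi.
Qed.

Lemma opbr_opbr f g h x p : noCollision N x ->
  opbr N f (opbr N g h) x p = poisson N f (poisson N g h) x p.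
Proof.
  intros HU. unfold opbr. rewrite poisson_anti.
  rewrite (poisson_agree N f f (poisson N h g) (scaleF (-1) (poisson N g h)))
    by first [exact HU|apply agree_refl|intros y q _; unfold scaleF; rewrite poisson_anti; ring].
  rewrite poisson_scaler. ring.
Qed.

End PoissonAlgebra.

(* Formal Lie polynomials in variables [LV n], and their normal form: a linear
   combination of bracket monomials, each oriented by a fixed total order and with
   the monomials [{n, n}] and [{i, j}] of declared commuting pairs removed.  Two
   Lie polynomials whose normal forms differ by instances of the Jacobi identity
   take the same value; [lra] finishes such comparisons. *)
Inductive LTerm := LV (n : nat) | LB (a b : LTerm) | LA (a b : LTerm) | LS (r : R) (a : LTerm) | LZ.
Inductive Mon := MV (n : nat) | MB (a b : Mon).

Fixpoint mon_eqb (a b : Mon) : bool :=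
  match a, b with
  | MV i, MV j => Nat.eqb i j
  | MB a1 a2, MB b1 b2 => andb (mon_eqb a1 b1) (mon_eqb a2 b2)
  | _, _ => false
  end.

Lemma mon_eqb_eq a b : mon_eqb a b = true -> a = b.
Proof.
  revert b; induction a; destruct b; simpl; try discriminate.
  - intros H; apply Nat.eqb_eq in H; now subst.
  - intros H; apply andb_prop in H; destruct H; f_equal; auto.
Qed.

Fixpoint mon_key (m : Mon) : list nat :=
  match m with MV n => [S (S n)] | MB a b => 0%nat :: mon_key a ++ 1%nat :: mon_key b end.

Fixpoint lexb (l1 l2 : list nat) : bool :=
  match l1, l2 with
  | [], _ => true
  | _ :: _, [] => false
  | a :: r1, b :: r2 => if Nat.ltb a b then true else if Nat.eqb a b then lexb r1 r2 else false
  end.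

Definition commutesb (cs : list (nat * nat)) (i j : nat) : bool :=
  existsb (fun q => orb (andb (Nat.eqb (fst q) i) (Nat.eqb (snd q) j))
                        (andb (Nat.eqb (fst q) j) (Nat.eqb (snd q) i))) cs.

Definition canon_bracket cs (m1 m2 : Mon) : option (R * Mon) :=
  if mon_eqb m1 m2 then None else
  if (match m1, m2 with MV i, MV j => commutesb cs i j | _, _ => false end) then None else
  if lexb (mon_key m1) (mon_key m2) then Some (1, MB m1 m2) else Some (-1, MB m2 m1).

Definition bracket_terms cs (cm1 cm2 : R * Mon) : list (R * Mon) :=
  match canon_bracket cs (snd cm1) (snd cm2) with
  | None => []
  | Some (s, m) => [(fst cm1 * fst cm2 * s, m)]
  end.

Fixpoint expand cs (t : LTerm) : list (R * Mon) :=
  match t with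
  | LV n => [(1, MV n)]
  | LA a b => expand cs a ++ expand cs b
  | LS r a => map (fun cm => (r * fst cm, snd cm)) (expand cs a)
  | LZ => []
  | LB a b => flat_map (fun cm1 => flat_map (fun cm2 => bracket_terms cs cm1 cm2) (expand cs b))
                       (expand cs a)
  end.

Fixpoint mon_term (m : Mon) : LTerm :=
  match m with MV n => LV n | MB a b => LB (mon_term a) (mon_term b) end.

Definition jacobi_term (m1 m2 m3 : Mon) : LTerm :=
  LA (LB (mon_term m1) (LB (mon_term m2) (mon_term m3)))
     (LA (LB (mon_term m2) (LB (mon_term m3) (mon_term m1)))
         (LB (mon_term m3) (LB (mon_term m1) (mon_term m2)))).

Definition commuting N (env : list Fun) (cs : list (nat * nat)) : Prop :=
  List.Forall (fun q => agree N (opbr N (nth (fst q) env zeroF) (nth (snd q) env zeroF)) zeroF) cs.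

Lemma smooth_nth N l n : List.Forall (Smooth N) l -> Smooth N (nth n l zeroF).
Proof. intros H. revert n; induction H; intros [|n]; simpl; auto using smooth_zero. Qed.

Section LieTerms.
Variable N : nat.
Variable env : list Fun.
Variable cs : list (nat * nat).
Hypothesis env_smooth : List.Forall (Smooth N) env.
Hypothesis cs_commute : commuting N env cs.

Let var n := nth n env zeroF.

Fixpoint interp (t : LTerm) : Fun :=
  match t with
  | LV n => var n
  | LB a b => opbr N (interp a) (interp b)
  | LA a b => addF (interp a) (interp b)
  | LS r a => scaleF r (interp a)
  | LZ => zeroF
  end.

Fixpoint imon (m : Mon) : Fun :=
  match m with MV n => var n | MB a b => opbr N (imon a) (imon b) end.

Definition lin_comb (l : list (R * Mon)) : Fun :=
  fun x p => fold_right (fun cm acc => fst cm * imon (snd cm) x p + acc) 0 l.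

Lemma smooth_var n : Smooth N (var n).
Proof. now apply smooth_nth. Qed.

Lemma smooth_imon m : Smooth N (imon m).
Proof. induction m; simpl; auto using smooth_var, smooth_opbr. Qed.

Lemma smooth_lin_comb l : Smooth N (lin_comb l).
Proof.
  induction l as [|[c m] l IH].
  - apply (smooth_ext N _ zeroF); [reflexivity|apply smooth_zero].
  - apply (smooth_ext N _ (addF (scaleF c (imon m)) (lin_comb l))); [reflexivity|].
    apply smooth_add; [apply smooth_scale, smooth_imon|exact IH].
Qed.

Lemma lin_comb_app l1 l2 x p : lin_comb (l1 ++ l2) x p = lin_comb l1 x p + lin_comb l2 x p.
Proof. induction l1; unfold lin_comb in *; simpl; [ring|]. rewrite IHl1. ring. Qed.

Lemma lin_comb_scale r l x p :
  lin_comb (map (fun cm => (r * fst cm, snd cm)) l) x p = r * lin_comb l x p.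
Proof. induction l; unfold lin_comb in *; simpl; [ring|]. rewrite IHl. ring. Qed.

Lemma lin_comb_flat_map (F : R * Mon -> list (R * Mon)) l x p :
  lin_comb (flat_map F l) x p = fold_right (fun cm acc => lin_comb (F cm) x p + acc) 0 l.
Proof. induction l; cbn [flat_map fold_right]; [reflexivity|]. now rewrite lin_comb_app, IHl. Qed.

Lemma commutesb_sound i j x p : commutesb cs i j = true -> noCollision N x ->
  opbr N (var i) (var j) x p = 0.
Proof.
  intros H HU. apply existsb_exists in H. destruct H as [[i' j'] [Hin Hq]].
  unfold commuting in cs_commute. rewrite Forall_forall in cs_commute.
  specialize (cs_commute _ Hin). simpl in *.
  apply Bool.orb_true_iff in Hq. destruct Hq as [Hq|Hq]; apply andb_prop in Hq;
    destruct Hq as [H1 H2]; apply Nat.eqb_eq in H1, H2; subst.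
  - now apply cs_commute.
  - unfold opbr. rewrite poisson_anti. fold (opbr N (var j) (var i)).
    rewrite cs_commute; auto. unfold zeroF; ring.
Qed.

Lemma bracket_terms_sound cm1 cm2 x p : noCollision N x ->
  lin_comb (bracket_terms cs cm1 cm2) x p
  = fst cm1 * fst cm2 * opbr N (imon (snd cm1)) (imon (snd cm2)) x p.
Proof.
  intros HU. destruct cm1 as [c1 m1], cm2 as [c2 m2]. unfold bracket_terms, canon_bracket; simpl.
  destruct (mon_eqb m1 m2) eqn:E.
  - apply mon_eqb_eq in E. subst. unfold opbr. rewrite poisson_self. unfold lin_comb; simpl. ring.
  - destruct (match m1 with MV i => match m2 with MV j => commutesb cs i j | MB _ _ => false end
              | MB _ _ => false end) eqn:E2.
    + destruct m1, m2; try discriminate. simpl. rewrite commutesb_sound; auto.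
      unfold lin_comb; simpl; ring.
    + destruct (lexb (mon_key m1) (mon_key m2)); unfold lin_comb; simpl; [ring|].
      unfold opbr. rewrite (poisson_anti N (imon m1) (imon m2)). ring.
Qed.

Lemma opbr_lin_comb_r f l : Smooth N f -> agree N (opbr N f (lin_comb l))
  (fun x p => fold_right (fun cm acc => fst cm * opbr N f (imon (snd cm)) x p + acc) 0 l).
Proof.
  intros Hf. induction l as [|[c m] l IH]; intros x p HU.
  - apply poisson_zerol.
  - unfold opbr in *. simpl.
    rewrite (poisson_agree N (lin_comb ((c, m) :: l)) (addF (scaleF c (imon m)) (lin_comb l)) f f)
      by first [exact HU|apply agree_refl|intros y q _; reflexivity].
    rewrite poisson_addl; auto using smooth_scale, smooth_imon, smooth_lin_comb.
    unfold addF. rewrite poisson_scalel, IH; auto.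
Qed.

Lemma opbr_lin_comb l1 l2 : agree N (opbr N (lin_comb l1) (lin_comb l2))
  (fun x p => fold_right (fun cm1 acc => fold_right (fun cm2 acc2 =>
     fst cm1 * fst cm2 * opbr N (imon (snd cm1)) (imon (snd cm2)) x p + acc2) 0 l2 + acc) 0 l1).
Proof.
  induction l1 as [|[c m] l IH]; intros x p HU.
  - apply poisson_zeror.
  - unfold opbr in *. simpl.
    rewrite (poisson_agree N (lin_comb l2) (lin_comb l2) (lin_comb ((c, m) :: l))
      (addF (scaleF c (imon m)) (lin_comb l)))
      by first [exact HU|apply agree_refl|intros y q _; reflexivity].
    rewrite poisson_addr; auto using smooth_scale, smooth_imon, smooth_lin_comb.
    unfold addF. rewrite poisson_scaler, IH; auto. f_equal.
    pose proof (opbr_lin_comb_r (imon m) l2 (smooth_imon m) x p HU) as H. unfold opbr in H.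
    rewrite H. clear. induction l2 as [|[c2 m2] l2 IH]; simpl; [ring|]. rewrite <- IH. ring.
Qed.

Lemma interp_expand t : agree N (interp t) (lin_comb (expand cs t)).
Proof.
  induction t; intros x p HU; cbn [interp expand].
  - unfold lin_comb; simpl; ring.
  - rewrite lin_comb_flat_map.
    rewrite (opbr_agree N _ _ _ _ IHt1 IHt2 x p HU), opbr_lin_comb by auto. clear IHt1 IHt2.
    induction (expand cs t1) as [|cm1 l1 IH1]; cbn [fold_right]; [reflexivity|].
    rewrite IH1, lin_comb_flat_map. f_equal. clear IH1.
    induction (expand cs t2) as [|cm2 l2 IH2]; cbn [fold_right]; [reflexivity|].
    rewrite IH2, bracket_terms_sound; auto.
  - unfold addF. rewrite lin_comb_app, IHt1, IHt2; auto.
  - unfold scaleF. rewrite lin_comb_scale, IHt; auto.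
  - reflexivity.
Qed.

Lemma interp_mon_term m : interp (mon_term m) = imon m.
Proof. induction m; simpl; auto. now rewrite IHm1, IHm2. Qed.

Lemma expand_jacobi m1 m2 m3 x p : noCollision N x ->
  lin_comb (expand cs (jacobi_term m1 m2 m3)) x p = 0.
Proof.
  intros HU. rewrite <- interp_expand by auto. unfold jacobi_term. simpl.
  rewrite !interp_mon_term. unfold addF. rewrite !opbr_opbr, <- Rplus_assoc by auto.
  apply poisson_jacobi; auto using smooth_imon.
Qed.

Lemma expand_jacobi_nested m0 m1 m2 m3 x p : noCollision N x ->
  lin_comb (expand cs (LB (mon_term m0) (jacobi_term m1 m2 m3))) x p = 0.
Proof.
  intros HU. rewrite <- interp_expand by auto. cbn [interp]. unfold opbr.
  rewrite (poisson_agree N (interp (jacobi_term m1 m2 m3)) zeroF (interp (mon_term m0))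
    (interp (mon_term m0))); auto using agree_refl.
  - apply poisson_zerol.
  - intros y q Hy. rewrite interp_expand, expand_jacobi; auto.
Qed.

End LieTerms.

Ltac list_forall := try unfold commuting; repeat (apply Forall_cons; [assumption|]); apply Forall_nil.

Ltac lie_normalize :=
  cbn [expand bracket_terms canon_bracket mon_eqb mon_key lexb commutesb existsb flat_map map app
       fst snd lin_comb fold_right Nat.eqb Nat.ltb Nat.leb andb orb jacobi_term mon_term] in *.

(** * Truncated Lie series and the BCH product *)

Definition ser_agree (N : nat) (A B : Ser) := forall k, (1 <= k <= 4)%nat -> agree N (A k) (B k).

Lemma ser_agree_refl N A : ser_agree N A A.
Proof. intros k _; apply agree_refl. Qed.

Lemma ser_agree_sym N A B : ser_agree N A B -> ser_agree N B A.
Proof. intros H k Hk; apply agree_sym; auto. Qed.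

Lemma ser_agree_trans N A B C : ser_agree N A B -> ser_agree N B C -> ser_agree N A C.
Proof. intros H1 H2 k Hk; eapply agree_trans; eauto. Qed.

Lemma brS_agree N A A' B B' : ser_agree N A A' -> ser_agree N B B' ->
  ser_agree N (brS N A B) (brS N A' B').
Proof.
  intros HA HB k Hk x p HU. unfold brS.
  replace (Nat.leb k 4) with true by (symmetry; apply Nat.leb_le; lia).
  apply sumR_ext; intros a Ha. destruct a as [|a]; [simpl; ring|]. simpl.
  rewrite (opbr_agree N (A (S a)) (A' (S a)) (B (k - S a)%nat) (B' (k - S a)%nat));
    auto; [apply HA|apply HB]; lia.
Qed.

Lemma addS_agree N A A' B B' : ser_agree N A A' -> ser_agree N B B' ->
  ser_agree N (addS A B) (addS A' B').
Proof. intros HA HB k Hk x p HU. unfold addS, addF. rewrite HA, HB; auto. Qed.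

Lemma scaleS_agree N c A A' : ser_agree N A A' -> ser_agree N (scaleS c A) (scaleS c A').
Proof. intros HA k Hk x p HU. unfold scaleS, scaleF. rewrite HA; auto. Qed.

Lemma bch_agree N X X' Y Y' : ser_agree N X X' -> ser_agree N Y Y' ->
  ser_agree N (bch N X Y) (bch N X' Y').
Proof.
  intros HX HY. unfold bch. cbv zeta.
  repeat apply addS_agree; auto; apply scaleS_agree; repeat apply brS_agree; auto.
Qed.

Definition smooth_ser N (A : Ser) := forall k, Smooth N (A k).

Lemma smooth_brS N A B : smooth_ser N A -> smooth_ser N B -> smooth_ser N (brS N A B).
Proof.
  intros HA HB k. unfold brS. destruct (Nat.leb k 4); [|apply smooth_zero].
  eapply smooth_ext; [|apply (smooth_sumR N k (fun a =>
    scaleF (if Nat.ltb 0 a then 1 else 0) (opbr N (A a) (B (k - a)%nat))))].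
  - intros x p. apply sumR_ext; intros. unfold scaleF. ring.
  - intros. apply smooth_scale, smooth_opbr; auto.
Qed.

Lemma smooth_bch N X Y : smooth_ser N X -> smooth_ser N Y -> smooth_ser N (bch N X Y).
Proof.
  intros HX HY. unfold bch; cbv zeta.
  repeat first [intros k; apply smooth_add; revert k | intros k; apply smooth_scale; revert k
               | apply smooth_brS | assumption].
Qed.

Lemma smooth_gen N c F : Smooth N F -> smooth_ser N (gen c F).
Proof. intros H k. unfold gen. destruct (Nat.eqb k 1); [apply smooth_scale; auto|apply smooth_zero]. Qed.

Definition LSer := nat -> LTerm.

Definition brL (A B : LSer) : LSer := fun k =>
  match k with
  | 2%nat => LB (A 1%nat) (B 1%nat)
  | 3%nat => LA (LB (A 1%nat) (B 2%nat)) (LB (A 2%nat) (B 1%nat))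
  | 4%nat => LA (LB (A 1%nat) (B 3%nat)) (LA (LB (A 2%nat) (B 2%nat)) (LB (A 3%nat) (B 1%nat)))
  | _ => LZ
  end.
Definition addL (A B : LSer) : LSer := fun k => LA (A k) (B k).
Definition scaleL (c : R) (A : LSer) : LSer := fun k => LS c (A k).
Definition bchL (X Y : LSer) : LSer :=
  addL (addL X Y)
   (addL (scaleL (1/2) (brL X Y))
    (addL (scaleL (1/12) (brL X (brL X Y)))
     (addL (scaleL (-1/12) (brL Y (brL X Y)))
           (scaleL (-1/24) (brL Y (brL X (brL X Y))))))).

Definition interpS N env (X : LSer) : Ser := fun k => interp N env (X k).

Lemma bch_interpS N env X Y X' Y' :
  ser_agree N X (interpS N env X') -> ser_agree N Y (interpS N env Y') ->
  ser_agree N (bch N X Y) (interpS N env (bchL X' Y')).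
Proof.
  assert (Hbr : forall A B, ser_agree N (brS N (interpS N env A) (interpS N env B))
                                        (interpS N env (brL A B))).
  { intros A B k Hk x p HU. unfold brS, interpS.
    destruct k as [|[|[|[|[|k]]]]]; try lia; unfold sumR; simpl; unfold addF, zeroF; ring. }
  intros HX HY. unfold bch, bchL. cbv zeta.
  repeat first
    [ eapply ser_agree_trans; [apply addS_agree|apply ser_agree_refl]
    | eapply ser_agree_trans; [apply scaleS_agree|apply ser_agree_refl]
    | eapply ser_agree_trans; [apply brS_agree|apply Hbr]
    | assumption ].
Qed.

Definition var4 (o : nat) : LSer := fun k =>
  match k with
  | 1%nat => LV o | 2%nat => LV (S o) | 3%nat => LV (S (S o)) | 4%nat => LV (S (S (S o)))
  | _ => LZ
  end.
Definition var1 (o : nat) : LSer := fun k => match k with 1%nat => LV o | _ => LZ end.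
Definition zeroL : LSer := fun _ => LZ.

Definition coeffs (A : Ser) : list Fun := [A 1%nat; A 2%nat; A 3%nat; A 4%nat].

Ltac lie_expand Henv Hcs HU :=
  unfold interpS; rewrite !(interp_expand _ _ _ Henv Hcs _ _ _ HU).

Section BchLaws.
Variables (N : nat) (env : list Fun).
Hypothesis Henv : List.Forall (Smooth N) env.

Let Hnil : commuting N env [].
Proof. constructor. Qed.

Lemma bchL_zero_r : ser_agree N (interpS N env (bchL (var4 0) zeroL)) (interpS N env (var4 0)).
Proof.
  intros k Hk x p HU. lie_expand Henv Hnil HU.
  destruct k as [|[|[|[|[|k]]]]]; try lia;
    unfold bchL, addL, scaleL, brL, var4, zeroL; lie_normalize; lra.
Qed.

Lemma bchL_zero_l : ser_agree N (interpS N env (bchL zeroL (var4 0))) (interpS N env (var4 0)).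
Proof.
  intros k Hk x p HU. lie_expand Henv Hnil HU.
  destruct k as [|[|[|[|[|k]]]]]; try lia;
    unfold bchL, addL, scaleL, brL, var4, zeroL; lie_normalize; lra.
Qed.

Lemma bchL_assoc_var1 : ser_agree N
  (interpS N env (bchL (bchL (var4 0) (var4 4)) (var1 8)))
  (interpS N env (bchL (var4 0) (bchL (var4 4) (var1 8)))).
Proof.
  intros k Hk x p HU. lie_expand Henv Hnil HU.
  pose proof (expand_jacobi N env [] Henv Hnil (MV 0) (MV 4) (MV 8) x p HU).
  pose proof (expand_jacobi N env [] Henv Hnil (MV 0) (MV 8) (MV 5) x p HU).
  pose proof (expand_jacobi N env [] Henv Hnil (MV 4) (MV 8) (MV 1) x p HU).
  pose proof (expand_jacobi N env [] Henv Hnil (MV 4) (MV 8) (MB (MV 0) (MV 4)) x p HU).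
  pose proof (expand_jacobi N env [] Henv Hnil (MV 0) (MV 4) (MB (MV 4) (MV 8)) x p HU).
  pose proof (expand_jacobi N env [] Henv Hnil (MV 0) (MV 4) (MB (MV 0) (MV 8)) x p HU).
  pose proof (expand_jacobi N env [] Henv Hnil (MV 0) (MV 8) (MB (MV 4) (MV 8)) x p HU).
  pose proof (expand_jacobi_nested N env [] Henv Hnil (MV 0) (MV 0) (MV 4) (MV 8) x p HU).
  pose proof (expand_jacobi_nested N env [] Henv Hnil (MV 8) (MV 0) (MV 4) (MV 8) x p HU).
  destruct k as [|[|[|[|[|k]]]]]; try lia; unfold bchL, addL, scaleL, brL, var4, var1;
    lie_normalize; lra.
Qed.

End BchLaws.

Lemma smooth_coeffs N A : smooth_ser N A -> List.Forall (Smooth N) (coeffs A).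
Proof. intros H. repeat apply Forall_cons; auto using Forall_nil. Qed.

Lemma coeffs_interpS N A env : ser_agree N A (interpS N (coeffs A ++ env) (var4 0)).
Proof. intros k Hk x p HU. now destruct k as [|[|[|[|[|k]]]]]; try lia. Qed.

Lemma bch_zero_r N Z : smooth_ser N Z -> ser_agree N (bch N Z zeroS) Z.
Proof.
  intros HZ. pose proof (coeffs_interpS N Z []) as HZ'. rewrite app_nil_r in HZ'.
  eapply ser_agree_trans; [apply (bch_interpS N (coeffs Z) _ _ (var4 0) zeroL)|].
  - exact HZ'.
  - intros k Hk x p HU. reflexivity.
  - eapply ser_agree_trans; [apply bchL_zero_r, smooth_coeffs, HZ|]. now apply ser_agree_sym.
Qed.

Lemma bch_zero_l N Z : smooth_ser N Z -> ser_agree N (bch N zeroS Z) Z.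
Proof.
  intros HZ. pose proof (coeffs_interpS N Z []) as HZ'. rewrite app_nil_r in HZ'.
  eapply ser_agree_trans; [apply (bch_interpS N (coeffs Z) _ _ zeroL (var4 0))|].
  - intros k Hk x p HU. reflexivity.
  - exact HZ'.
  - eapply ser_agree_trans; [apply bchL_zero_l, smooth_coeffs, HZ|]. now apply ser_agree_sym.
Qed.

Lemma bch_assoc_gen N Z Y c F : smooth_ser N Z -> smooth_ser N Y -> Smooth N F ->
  ser_agree N (bch N (bch N Z Y) (gen c F)) (bch N Z (bch N Y (gen c F))).
Proof.
  intros HZ HY HF. set (env := coeffs Z ++ coeffs Y ++ [scaleF c F]).
  assert (Henv : List.Forall (Smooth N) env).
  { apply Forall_app; split; [|apply Forall_app; split]; auto using smooth_coeffs.
    repeat apply Forall_cons; auto using Forall_nil, smooth_scale. }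
  assert (HZ' : ser_agree N Z (interpS N env (var4 0))) by apply coeffs_interpS.
  assert (HY' : ser_agree N Y (interpS N env (var4 4))).
  { intros k Hk x p HU. now destruct k as [|[|[|[|[|k]]]]]; try lia. }
  assert (HA' : ser_agree N (gen c F) (interpS N env (var1 8))).
  { intros k Hk x p HU. now destruct k as [|[|[|[|[|k]]]]]; try lia. }
  eapply ser_agree_trans; [apply bch_interpS; [apply bch_interpS; eauto|eauto]|].
  eapply ser_agree_trans; [apply bchL_assoc_var1; auto|].
  apply ser_agree_sym. apply bch_interpS; [|apply bch_interpS]; eauto.
Qed.

Definition is_gen N (s : Ser) := exists c F, s = gen c F /\ Smooth N F.

Lemma smooth_fold_bch N l Z : List.Forall (is_gen N) l -> smooth_ser N Z ->
  smooth_ser N (fold_left (bch N) l Z).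
Proof.
  revert Z; induction l; intros Z Hl HZ; simpl; auto.
  inversion Hl as [|? ? [c [F [-> HF]]] Hl']; subst.
  apply IHl; auto. apply smooth_bch; auto. apply smooth_gen; auto.
Qed.

Lemma smooth_logProd N l : List.Forall (is_gen N) l -> smooth_ser N (logProd N l).
Proof. intros; apply smooth_fold_bch; auto. intros k; apply smooth_zero. Qed.

Lemma fold_bch N l Z : List.Forall (is_gen N) l -> smooth_ser N Z ->
  ser_agree N (fold_left (bch N) l Z) (bch N Z (logProd N l)).
Proof.
  induction l as [|g l IH] using rev_ind; intros Hl HZ.
  - apply ser_agree_sym, bch_zero_r; auto.
  - apply Forall_app in Hl. destruct Hl as [Hl Hg].
    inversion Hg as [|? ? [c [F [-> HF]]]]; subst.
    unfold logProd. rewrite !fold_left_app. simpl.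
    eapply ser_agree_trans; [apply bch_agree; [apply IH; auto|apply ser_agree_refl]|].
    apply bch_assoc_gen; auto. apply smooth_logProd; auto.
Qed.

Lemma logProd_app N l1 l2 : List.Forall (is_gen N) l1 -> List.Forall (is_gen N) l2 ->
  ser_agree N (logProd N (l1 ++ l2)) (bch N (logProd N l1) (logProd N l2)).
Proof.
  intros H1 H2. unfold logProd at 1. rewrite fold_left_app. apply fold_bch; auto.
  apply smooth_logProd; auto.
Qed.

Section LieIdentities.
Variables (N : nat) (A B C : Fun).
Hypotheses (HA : Smooth N A) (HB : Smooth N B) (HC : Smooth N C).

Lemma opbr_exchange : agree N (opbr N A B) zeroF ->
  agree N (opbr N A (opbr N B C)) (opbr N B (opbr N A C)).
Proof.
  intros HAB x p HU.
  assert (Henv : List.Forall (Smooth N) [A; B; C]) by list_forall.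
  assert (Hcs : commuting N [A; B; C] [(0, 1)%nat]) by list_forall.
  pose proof (interp_expand N _ _ Henv Hcs (LB (LV 0) (LB (LV 1) (LV 2))) x p HU) as E1.
  pose proof (interp_expand N _ _ Henv Hcs (LB (LV 1) (LB (LV 0) (LV 2))) x p HU) as E2.
  pose proof (expand_jacobi N _ _ Henv Hcs (MV 0) (MV 1) (MV 2) x p HU).
  cbn [interp nth] in E1, E2. rewrite E1, E2. lie_normalize. lra.
Qed.

Lemma opbr_opbr_zero : agree N (opbr N A B) zeroF -> agree N (opbr N A C) zeroF ->
  agree N (opbr N A (opbr N B C)) zeroF.
Proof.
  intros HAB HAC x p HU. rewrite opbr_exchange by auto.
  unfold opbr at 1. rewrite (poisson_agree N _ _ B B HAC (agree_refl N B)) by auto.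
  apply poisson_zerol.
Qed.

Lemma opbr_add_commuting : agree N (opbr N A B) zeroF -> agree N (opbr N B C) zeroF ->
  agree N (opbr N (addF A B) (opbr N (addF A B) C)) (opbr N A (opbr N A C)).
Proof.
  intros HAB HBC x p HU.
  assert (Henv : List.Forall (Smooth N) [A; B; C]) by list_forall.
  assert (Hcs : commuting N [A; B; C] [(0, 1); (1, 2)]%nat) by list_forall.
  pose proof (interp_expand N _ _ Henv Hcs
    (LB (LA (LV 0) (LV 1)) (LB (LA (LV 0) (LV 1)) (LV 2))) x p HU) as E1.
  pose proof (interp_expand N _ _ Henv Hcs (LB (LV 0) (LB (LV 0) (LV 2))) x p HU) as E2.
  pose proof (expand_jacobi N _ _ Henv Hcs (MV 0) (MV 1) (MV 2) x p HU).
  cbn [interp nth] in E1, E2. rewrite E1, E2. lie_normalize. lra.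
Qed.

End LieIdentities.

Definition pos_only (f : Fun) := forall x p q, f x p = f x q.
Definition mom_only (f : Fun) := forall x y p, f x p = f y p.
Definition indepX (f : Fun) k := forall x p a t, f (upd x k a t) p = f x p.
Definition indepP (f : Fun) k := forall x p a t, f x (upd p k a t) = f x p.

Lemma dP_indepP f k a x p : indepP f k -> dP f k a x p = 0.
Proof. intros H. apply (Derive_const_fun _ (f x p)). intros t. apply H. Qed.

Lemma dX_indepX f k a x p : indepX f k -> dX f k a x p = 0.
Proof. intros H. apply (Derive_const_fun _ (f x p)). intros t. apply H. Qed.

Lemma dP_pos_only f k a x p : pos_only f -> dP f k a x p = 0.
Proof. intros H. apply dP_indepP. intros y q b t. apply H. Qed.

Lemma dX_mom_only f k a x p : mom_only f -> dX f k a x p = 0.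
Proof. intros H. apply dX_indepX. intros y q b t. apply H. Qed.

Lemma opbr_pos_only N f g x p : pos_only f -> pos_only g -> opbr N f g x p = 0.
Proof. intros Hf Hg. apply phase_sum_zero; intros k a. rewrite !dP_pos_only by auto. ring. Qed.

Lemma opbr_mom_only N f g x p : mom_only f -> mom_only g -> opbr N f g x p = 0.
Proof. intros Hf Hg. apply phase_sum_zero; intros k a. rewrite !dX_mom_only by auto. ring. Qed.

Lemma opbr_separated N f g x p : pos_only g -> (forall k, indepP f k \/ indepX g k) ->
  opbr N f g x p = 0.
Proof.
  intros Hg Hk. apply phase_sum_zero; intros k a. rewrite (dP_pos_only g) by auto.
  destruct (Hk k) as [H|H]; [rewrite (dP_indepP f)|rewrite (dX_indepX g)]; auto; ring.
Qed.

Section NBody.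
Variables (N : nat) (G : R) (m : nat -> R).

Definition pair_ok (b : nat * nat) := (fst b < N)%nat /\ (snd b < N)%nat /\ fst b <> snd b.

Definition Tb (b : nat * nat) : Fun := addF (Ti m (fst b)) (Ti m (snd b)).
Definition Vb (b : nat * nat) : Fun := Vij G m (fst b) (snd b).
Definition Trest (b : nat * nat) : Fun := fun x p => Tkin N m x p - Ti m (fst b) x p - Ti m (snd b) x p.
Definition Vsum (l : list (nat * nat)) : Fun := lsumF l Vb.

Lemma smooth_Ti i : Smooth N (Ti m i).
Proof.
  exists (EMul (Cst (/ (2 * m i))) (sum_expr 3 (fun a => EMul (Pc i a) (Pc i a)))).
  split; [split; [exact I|apply wf_sum_expr; intros; split; exact I]|].
  intros x p _. cbn [ev]. rewrite ev_sum_expr. unfold Ti, sumR; simpl. unfold Rdiv. ring.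
Qed.

Lemma smooth_Vb b : pair_ok b -> Smooth N (Vb b).
Proof.
  intros Hb. exists (EMul (Cst (- G * m (fst b) * m (snd b))) (InvDist (fst b) (snd b))).
  split; [simpl; tauto|]. intros x p _. simpl. unfold Vb, Vij, dist2, Rdiv. ring.
Qed.

Lemma smooth_Tb b : Smooth N (Tb b).
Proof. apply smooth_add; apply smooth_Ti. Qed.

Lemma smooth_Tkin : Smooth N (Tkin N m).
Proof. apply (smooth_sumR N N (fun i => Ti m i)). intros; apply smooth_Ti. Qed.

Lemma smooth_Trest b : Smooth N (Trest b).
Proof.
  apply (smooth_ext N _ (addF (Tkin N m) (scaleF (-1) (Tb b)))).
  - intros x p. unfold Trest, addF, scaleF, Tb, addF. ring.
  - apply smooth_add; [apply smooth_Tkin|apply smooth_scale, smooth_Tb].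
Qed.

Lemma smooth_Vsum l : List.Forall pair_ok l -> Smooth N (Vsum l).
Proof.
  intros Hl. apply smooth_lsumF. intros a Ha. apply smooth_Vb. eapply Forall_forall; eauto.
Qed.

Lemma Tkin_split b : agree N (Tkin N m) (addF (Tb b) (Trest b)).
Proof. intros x p _. unfold addF, Tb, Trest, addF. ring. Qed.

Lemma Ti_upd_other i k a t p x : i <> k -> Ti m i x (upd p k a t) = Ti m i x p.
Proof. intros H. unfold Ti. f_equal. apply sumR_ext; intros. rewrite upd_other; auto. Qed.

Lemma Tkin_minus_Ti_upd k a t x p : (k < N)%nat ->
  Tkin N m x (upd p k a t) - Ti m k x (upd p k a t) = Tkin N m x p - Ti m k x p.
Proof.
  intros Hk. unfold Tkin. clear - Hk. induction N as [|n IH]; [lia|].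
  rewrite !sumR_S. destruct (Nat.eq_dec n k) as [->|Hn].
  - rewrite (sumR_ext k (fun i => Ti m i x (upd p k a t)) (fun i => Ti m i x p)).
    + ring.
    + intros. apply Ti_upd_other. lia.
  - rewrite (Ti_upd_other n) by auto. specialize (IH ltac:(lia)). lra.
Qed.

Lemma indepX_Vb b k : k <> fst b -> k <> snd b -> indepX (Vb b) k.
Proof.
  intros H1 H2 x p a t. unfold Vb, Vij. do 2 f_equal. apply sumR_ext; intros.
  rewrite !upd_other; auto.
Qed.

Lemma indepP_Trest b k : pair_ok b -> (k = fst b \/ k = snd b) -> indepP (Trest b) k.
Proof.
  intros [Hi [Hj Hij]] Hk x p a t. unfold Trest.
  destruct Hk as [-> | ->].
  - rewrite (Ti_upd_other (snd b)) by auto. pose proof (Tkin_minus_Ti_upd (fst b) a t x p Hi). lra.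
  - rewrite (Ti_upd_other (fst b)) by auto. pose proof (Tkin_minus_Ti_upd (snd b) a t x p Hj). lra.
Qed.

Lemma opbr_Trest_Vb b : pair_ok b -> agree N (opbr N (Trest b) (Vb b)) zeroF.
Proof.
  intros Hb x p _. apply opbr_separated; [now intros ? ? ?|]. intros k.
  destruct (Nat.eq_dec k (fst b)); [left; apply indepP_Trest; auto|].
  destruct (Nat.eq_dec k (snd b)); [left; apply indepP_Trest; auto|].
  right. apply indepX_Vb; auto.
Qed.

Lemma opbr_Vb_Trest b : pair_ok b -> agree N (opbr N (Vb b) (Trest b)) zeroF.
Proof.
  intros Hb x p HU. unfold opbr. rewrite poisson_anti.
  fold (opbr N (Trest b) (Vb b)). rewrite opbr_Trest_Vb; auto. unfold zeroF; ring.
Qed.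

Definition disjoint_pairs (a b : nat * nat) :=
  fst a <> fst b /\ fst a <> snd b /\ snd a <> fst b /\ snd a <> snd b.

Lemma opbr_Tb_Vb_disjoint a b : disjoint_pairs a b -> agree N (opbr N (Tb a) (Vb b)) zeroF.
Proof.
  intros Hab x p _. apply opbr_separated; [now intros ? ? ?|]. intros k.
  destruct (Nat.eq_dec k (fst a)) as [->|E1]; [right; apply indepX_Vb; apply Hab|].
  destruct (Nat.eq_dec k (snd a)) as [->|E2]; [right; apply indepX_Vb; apply Hab|].
  left. intros y q c t. unfold Tb, addF. rewrite !Ti_upd_other; auto.
Qed.

End NBody.

(** * One binary kick *)

Definition ser13 (A C : Fun) : Ser :=
  fun k => match k with 1%nat => A | 3%nat => C | _ => zeroF end.
Definition ser13L (a c : LTerm) : LSer :=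
  fun k => match k with 1%nat => a | 3%nat => c | _ => LZ end.
Definition gen1L (c : R) (t : LTerm) : LSer :=
  fun k => match k with 1%nat => LS c t | _ => LZ end.

(* With [LV 0] the pair's kinetic energy and [LV 1] its potential. *)
Definition kickL : LSer :=
  bchL (bchL zeroL (gen1L (1/2) (LA (LV 0) (LV 1)))) (gen1L (-(1/2)) (LV 0)).
Definition kick_revL : LSer :=
  bchL (bchL zeroL (gen1L (-(1/2)) (LV 0))) (gen1L (1/2) (LA (LV 0) (LV 1))).

Lemma ser13_agree N A A' C C' : agree N A A' -> agree N C C' -> ser_agree N (ser13 A C) (ser13 A' C').
Proof. intros HA HC k Hk. destruct k as [|[|[|[|[|k]]]]]; try lia; simpl; auto using agree_refl. Qed.

Lemma ser13_interpS N env a c :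
  ser_agree N (ser13 (interp N env a) (interp N env c)) (interpS N env (ser13L a c)).
Proof. intros k Hk x p HU. now destruct k as [|[|[|[|[|k]]]]]; try lia. Qed.

Section Kick.
Variables (N : nat) (G : R) (m : nat -> R) (b : nat * nat) (env : list Fun).
Hypotheses (HT : nth 0 env zeroF = Tb m b) (HV : nth 1 env zeroF = Vb G m b).

Lemma logProd_kick : ser_agree N (logProd N (kick G m (1/2) b)) (interpS N env kickL).
Proof.
  unfold logProd, kickL. simpl.
  apply bch_interpS; [apply bch_interpS|]; intros k Hk x p HU; [reflexivity| |];
    destruct k as [|[|[|[|[|k]]]]]; try lia; unfold interpS, gen; simpl; rewrite ?HT, ?HV; reflexivity.
Qed.

Lemma logProd_kick_rev : ser_agree N (logProd N (rev (kick G m (1/2) b))) (interpS N env kick_revL).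
Proof.
  unfold logProd, kick_revL. simpl.
  apply bch_interpS; [apply bch_interpS|]; intros k Hk x p HU; [reflexivity| |];
    destruct k as [|[|[|[|[|k]]]]]; try lia; unfold interpS, gen; simpl; rewrite ?HT, ?HV; reflexivity.
Qed.

End Kick.

Definition delta_DBL : LTerm :=
  LA (LS (-1/8) (LB (LV 2) (LB (LV 1) (LV 0))))
     (LA (LS (-1/12) (LB (LV 1) (LB (LV 1) (LV 0)))) (LS (1/24) (LB (LV 0) (LB (LV 0) (LV 1))))).
Definition delta_BDL : LTerm := LS (-1/24) (LB (LV 1) (LB (LV 0) (LV 3))).

Section KickIdentities.
Variables (N : nat) (env : list Fun).
Hypothesis Henv : List.Forall (Smooth N) env.

Lemma kick_DB_identity :
  agree N (opbr N (nth 1 env zeroF) (nth 2 env zeroF)) zeroF ->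
  ser_agree N (interpS N env (bchL (bchL kick_revL (ser13L (LV 2) (LV 3))) kickL))
              (interpS N env (ser13L (LA (LV 1) (LV 2)) (LA (LV 3) delta_DBL))).
Proof.
  intros H12 k Hk x p HU.
  assert (Hcs : commuting N env [(1, 2)%nat]) by list_forall.
  lie_expand Henv Hcs HU.
  pose proof (expand_jacobi N env _ Henv Hcs (MV 0) (MV 1) (MB (MV 0) (MV 1)) x p HU).
  pose proof (expand_jacobi N env _ Henv Hcs (MV 1) (MV 2) (MB (MV 0) (MV 1)) x p HU).
  destruct k as [|[|[|[|[|k]]]]]; try lia;
    unfold kickL, kick_revL, bchL, addL, scaleL, brL, zeroL, gen1L, ser13L, delta_DBL;
    lie_normalize; lra.
Qed.

Lemma kick_BD_identity :
  agree N (opbr N (nth 0 env zeroF) (nth 2 env zeroF)) zeroF ->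
  agree N (opbr N (nth 1 env zeroF) (nth 2 env zeroF)) zeroF ->
  agree N (opbr N (nth 1 env zeroF) (nth 3 env zeroF)) zeroF ->
  ser_agree N
    (interpS N env (bchL (bchL kickL (ser13L (LA (LA (LV 0) (LV 2)) (LV 3)) (LV 4))) kick_revL))
    (interpS N env (ser13L (LA (LA (LA (LV 0) (LV 2)) (LV 3)) (LV 1)) (LA (LV 4) delta_BDL))).
Proof.
  intros H02 H12 H13 k Hk x p HU.
  assert (Hcs : commuting N env [(0, 2); (1, 2); (1, 3)]%nat) by list_forall.
  lie_expand Henv Hcs HU.
  pose proof (expand_jacobi N env _ Henv Hcs (MV 0) (MV 1) (MV 2) x p HU).
  pose proof (expand_jacobi N env _ Henv Hcs (MV 0) (MV 1) (MV 3) x p HU).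
  pose proof (expand_jacobi N env _ Henv Hcs (MV 1) (MV 2) (MB (MV 0) (MV 1)) x p HU).
  pose proof (expand_jacobi N env _ Henv Hcs (MV 1) (MV 3) (MB (MV 0) (MV 1)) x p HU).
  pose proof (expand_jacobi N env _ Henv Hcs (MV 0) (MV 1) (MB (MV 0) (MV 1)) x p HU).
  destruct k as [|[|[|[|[|k]]]]]; try lia;
    unfold kickL, kick_revL, bchL, addL, scaleL, brL, zeroL, gen1L, ser13L, delta_BDL;
    lie_normalize; lra.
Qed.

Lemma drift_identity :
  ser_agree N
    (interpS N env (bchL (bchL (gen1L (1/2) (LV 0)) (ser13L (LV 1) (LV 2))) (gen1L (1/2) (LV 0))))
    (interpS N env (ser13L (LA (LV 0) (LV 1))
       (LA (LV 2) (LA (LS (1/12) (LB (LV 1) (LB (LV 1) (LV 0))))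
                      (LS (-1/24) (LB (LV 0) (LB (LV 0) (LV 1)))))))).
Proof.
  intros k Hk x p HU.
  assert (Hcs : commuting N env []) by constructor.
  lie_expand Henv Hcs HU.
  pose proof (expand_jacobi N env _ Henv Hcs (MV 0) (MV 1) (MB (MV 0) (MV 1)) x p HU).
  destruct k as [|[|[|[|[|k]]]]]; try lia;
    unfold bchL, addL, scaleL, brL, gen1L, ser13L; lie_normalize; lra.
Qed.

End KickIdentities.

Section KickSteps.
Variables (N : nat) (G : R) (m : nat -> R).

Definition delta_DB (b : nat * nat) (Vs : Fun) : Fun :=
  addF (scaleF (-1/8) (opbr N Vs (opbr N (Vb G m b) (Tb m b))))
    (addF (scaleF (-1/12) (opbr N (Vb G m b) (opbr N (Vb G m b) (Tb m b))))
          (scaleF (1/24) (opbr N (Tb m b) (opbr N (Tb m b) (Vb G m b))))).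

Definition delta_BD (b : nat * nat) (Vs : Fun) : Fun :=
  scaleF (-1/24) (opbr N (Vb G m b) (opbr N (Tb m b) Vs)).

Lemma DB_kick_step b Mser Vs M3 : pair_ok N b -> Smooth N Vs -> pos_only Vs -> Smooth N M3 ->
  ser_agree N Mser (ser13 Vs M3) ->
  ser_agree N (bch N (bch N (logProd N (rev (kick G m (1/2) b))) Mser) (logProd N (kick G m (1/2) b)))
    (ser13 (addF (Vb G m b) Vs) (addF M3 (delta_DB b Vs))).
Proof.
  intros Hb HVs HxVs HM3 HM.
  set (env := [Tb m b; Vb G m b; Vs; M3]).
  assert (Henv : List.Forall (Smooth N) env).
  { repeat apply Forall_cons; auto using Forall_nil, smooth_Tb, smooth_Vb. }
  eapply ser_agree_trans.
  { apply (bch_interpS N env _ _ (bchL kick_revL (ser13L (LV 2) (LV 3))) kickL);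
      [apply bch_interpS|].
    - apply logProd_kick_rev; reflexivity.
    - eapply ser_agree_trans; [exact HM|apply (ser13_interpS N env (LV 2) (LV 3))].
    - apply logProd_kick; reflexivity. }
  eapply ser_agree_trans; [apply kick_DB_identity; auto|].
  - intros x p _. apply opbr_pos_only; [now intros ? ? ?|auto].
  - apply ser_agree_sym, (ser13_interpS N env (LA (LV 1) (LV 2)) (LA (LV 3) delta_DBL)).
Qed.

Lemma BD_kick_step b Nser Vs N3 : pair_ok N b -> Smooth N Vs -> pos_only Vs -> Smooth N N3 ->
  ser_agree N Nser (ser13 (addF (Tkin N m) Vs) N3) ->
  ser_agree N (bch N (bch N (logProd N (kick G m (1/2) b)) Nser) (logProd N (rev (kick G m (1/2) b))))
    (ser13 (addF (Tkin N m) (addF Vs (Vb G m b))) (addF N3 (delta_BD b Vs))).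
Proof.
  intros Hb HVs HxVs HN3 HNs.
  set (env := [Tb m b; Vb G m b; Trest N m b; Vs; N3]).
  assert (Henv : List.Forall (Smooth N) env).
  { repeat apply Forall_cons; auto using Forall_nil, smooth_Tb, smooth_Vb, smooth_Trest. }
  assert (HT : agree N (Tkin N m) (interp N env (LA (LV 0) (LV 2)))) by apply Tkin_split.
  eapply ser_agree_trans.
  { apply (bch_interpS N env _ _
      (bchL kickL (ser13L (LA (LA (LV 0) (LV 2)) (LV 3)) (LV 4))) kick_revL); [apply bch_interpS|].
    - apply logProd_kick; reflexivity.
    - eapply ser_agree_trans; [exact HNs|].
      eapply ser_agree_trans; [|apply (ser13_interpS N env (LA (LA (LV 0) (LV 2)) (LV 3)) (LV 4))].
      apply ser13_agree; [|apply agree_refl]. intros x p HU. unfold addF at 1. rewrite HT; auto.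
    - apply logProd_kick_rev; reflexivity. }
  eapply ser_agree_trans; [apply kick_BD_identity; auto|].
  - intros x p _. apply opbr_mom_only; now intros ? ? ?.
  - now apply opbr_Vb_Trest.
  - intros x p _. apply opbr_pos_only; [now intros ? ? ?|auto].
  - eapply ser_agree_trans; [apply ser_agree_sym, (ser13_interpS N env _ (LA (LV 4) delta_BDL))|].
    apply ser13_agree; [|apply agree_refl]. intros x p HU.
    change (addF (Tkin N m) (addF Vs (Vb G m b)) x p) with (Tkin N m x p + (Vs x p + Vb G m b x p)).
    rewrite HT by auto. unfold env; cbn [interp nth]. unfold addF. ring.
Qed.

End KickSteps.

Section Composition.
Variables (N : nat) (G : R) (m : nat -> R).

Lemma psiW_app c l1 l2 : psiW G m c (l1 ++ l2) = psiW G m c l1 ++ psiW G m c l2.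
Proof. apply flat_map_app. Qed.

Lemma psiW_one c b : psiW G m c [b] = kick G m c b.
Proof. apply app_nil_r. Qed.

Lemma is_gen_kick b : pair_ok N b -> List.Forall (is_gen N) (kick G m (1/2) b).
Proof.
  intros Hb. repeat apply Forall_cons; try apply Forall_nil.
  - exists (1/2), (Hij G m (fst b) (snd b)). split; auto.
    apply smooth_add; [apply smooth_Tb|apply smooth_Vb; auto].
  - exists (-(1/2)), (Tb m b). split; auto. apply smooth_Tb.
Qed.

Lemma is_gen_psiW l : List.Forall (pair_ok N) l -> List.Forall (is_gen N) (psiW G m (1/2) l).
Proof.
  induction 1; [constructor|]. unfold psiW in *. cbn [flat_map].
  apply Forall_app; split; auto using is_gen_kick.
Qed.

Lemma is_gen_Tkin c : List.Forall (is_gen N) [gen c (Tkin N m)].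
Proof.
  apply Forall_cons; [|apply Forall_nil]. exists c, (Tkin N m). split; auto. apply smooth_Tkin.
Qed.

(* The order-h^3 part of the logarithm of the kick sequence ψ†ψ of [DB2]; the last pair of
   [l] is the outermost kick, hence the recursion on the reversed list.  The order-h part is
   [Vsum l]: the kinetic terms of the kicks cancel. *)
Fixpoint c3_DB_rev (lr : list (nat * nat)) : Fun :=
  match lr with
  | [] => zeroF
  | b :: lr' => addF (c3_DB_rev lr') (delta_DB N G m b (Vsum G m (rev lr')))
  end.
Definition c3_DB (l : list (nat * nat)) : Fun := c3_DB_rev (rev l).

Lemma c3_DB_snoc l b : c3_DB (l ++ [b]) = addF (c3_DB l) (delta_DB N G m b (Vsum G m l)).
Proof. unfold c3_DB. rewrite rev_app_distr. simpl. now rewrite rev_involutive. Qed.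

Fixpoint c3_BD (l : list (nat * nat)) : Fun :=
  match l with
  | [] => zeroF
  | b :: l' => addF (c3_BD l') (delta_BD N G m b (Vsum G m l'))
  end.

Lemma smooth_delta_DB b Vs : pair_ok N b -> Smooth N Vs -> Smooth N (delta_DB N G m b Vs).
Proof.
  intros Hb HV. pose proof (smooth_Tb N m b). pose proof (smooth_Vb N G m b Hb).
  unfold delta_DB. apply smooth_add; [|apply smooth_add]; apply smooth_scale;
    repeat apply smooth_opbr; assumption.
Qed.

Lemma smooth_delta_BD b Vs : pair_ok N b -> Smooth N Vs -> Smooth N (delta_BD N G m b Vs).
Proof.
  intros Hb HV. pose proof (smooth_Tb N m b). pose proof (smooth_Vb N G m b Hb).
  unfold delta_BD. apply smooth_scale. repeat apply smooth_opbr; assumption.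
Qed.

Lemma logProd_DB_kicks l : List.Forall (pair_ok N) l ->
  ser_agree N (logProd N (psiWdag G m (1/2) l ++ psiW G m (1/2) l)) (ser13 (Vsum G m l) (c3_DB l))
  /\ Smooth N (c3_DB l).
Proof.
  induction l as [|b l IH] using rev_ind; intros Hl.
  - split; [|apply smooth_zero]. intros k Hk x p HU. now destruct k as [|[|[|[|[|k]]]]]; try lia.
  - apply Forall_app in Hl. destruct Hl as [Hl Hb]. inversion Hb as [|? ? Hb' _]; subst.
    destruct (IH Hl) as [IH1 IH2].
    assert (Hgen : List.Forall (is_gen N) (psiWdag G m (1/2) l ++ psiW G m (1/2) l))
      by (apply Forall_app; split; [apply Forall_rev|]; apply is_gen_psiW; auto).
    replace (psiWdag G m (1/2) (l ++ [b]) ++ psiW G m (1/2) (l ++ [b])) with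
      ((rev (kick G m (1/2) b) ++ (psiWdag G m (1/2) l ++ psiW G m (1/2) l)) ++ kick G m (1/2) b).
    2:{ unfold psiWdag. rewrite psiW_app, psiW_one, rev_app_distr, <- !app_assoc. reflexivity. }
    rewrite c3_DB_snoc. split; [|apply smooth_add; auto using smooth_delta_DB, smooth_Vsum].
    eapply ser_agree_trans; [apply logProd_app|].
    { apply Forall_app; split; [apply Forall_rev, is_gen_kick; auto|exact Hgen]. }
    { apply is_gen_kick; auto. }
    eapply ser_agree_trans; [apply bch_agree; [apply logProd_app|apply ser_agree_refl]|].
    { apply Forall_rev, is_gen_kick; auto. } { exact Hgen. }
    eapply ser_agree_trans;
      [apply DB_kick_step; [exact Hb'|apply smooth_Vsum, Hl|now intros ? ? ?|exact IH2|exact IH1]|].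
    apply ser13_agree; [|apply agree_refl].
    intros x p _. unfold addF, Vsum, lsumF. rewrite lsum_app. simpl. ring.
Qed.

Lemma logProd_BD l : List.Forall (pair_ok N) l ->
  ser_agree N (logProd N (BD2 N G m l)) (ser13 (addF (Tkin N m) (Vsum G m l)) (c3_BD l))
  /\ Smooth N (c3_BD l).
Proof.
  induction l as [|b l IH]; intros Hl.
  - split; [|apply smooth_zero]. unfold BD2, logProd. simpl.
    eapply ser_agree_trans; [apply bch_zero_l, smooth_gen, smooth_Tkin|].
    intros k Hk x p HU. destruct k as [|[|[|[|[|k]]]]]; try lia; try reflexivity.
    unfold gen, scaleF, addF, Vsum. simpl. ring.
  - inversion Hl as [|? ? Hb Hl']; subst. destruct (IH Hl') as [IH1 IH2].
    assert (Hgen : List.Forall (is_gen N) (BD2 N G m l)).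
    { unfold BD2, psiWdag. apply Forall_app; split; [|apply Forall_app; split];
        auto using is_gen_psiW, is_gen_Tkin, Forall_rev. }
    replace (BD2 N G m (b :: l)) with ((kick G m (1/2) b ++ BD2 N G m l) ++ rev (kick G m (1/2) b)).
    2:{ unfold BD2, psiWdag. change (b :: l) with ([b] ++ l).
        rewrite psiW_app, psiW_one, rev_app_distr, <- !app_assoc. reflexivity. }
    split; [|apply smooth_add; auto using smooth_delta_BD, smooth_Vsum].
    eapply ser_agree_trans; [apply logProd_app|].
    { apply Forall_app; split; [apply is_gen_kick; auto|exact Hgen]. }
    { apply Forall_rev, is_gen_kick; auto. }
    eapply ser_agree_trans; [apply bch_agree; [apply logProd_app|apply ser_agree_refl]|].
    { apply is_gen_kick; auto. } { exact Hgen. }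
    eapply ser_agree_trans;
      [apply BD_kick_step; [exact Hb|apply smooth_Vsum, Hl'|now intros ? ? ?|exact IH2|exact IH1]|].
    apply ser13_agree; [|apply agree_refl]. intros x p _. unfold addF, Vsum, lsumF. simpl. ring.
Qed.


Lemma logProd_DB l : List.Forall (pair_ok N) l ->
  ser_agree N (logProd N (DB2 N G m l))
    (ser13 (addF (Tkin N m) (Vsum G m l))
       (addF (c3_DB l)
          (addF (scaleF (1/12) (opbr N (Vsum G m l) (opbr N (Vsum G m l) (Tkin N m))))
                (scaleF (-1/24) (opbr N (Tkin N m) (opbr N (Tkin N m) (Vsum G m l))))))).
Proof.
  intros Hl. destruct (logProd_DB_kicks l Hl) as [Hmid Hc3].
  set (env := [Tkin N m; Vsum G m l; c3_DB l]).
  assert (Henv : List.Forall (Smooth N) env).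
  { repeat apply Forall_cons; auto using Forall_nil, smooth_Tkin, smooth_Vsum. }
  set (g := gen (1/2) (Tkin N m)).
  assert (Hg : ser_agree N (logProd N [g]) (interpS N env (gen1L (1/2) (LV 0)))).
  { unfold logProd. simpl. eapply ser_agree_trans; [apply bch_zero_l, smooth_gen, smooth_Tkin|].
    intros k Hk x p HU. now destruct k as [|[|[|[|[|k]]]]]; try lia. }
  replace (DB2 N G m l) with (([g] ++ (psiWdag G m (1/2) l ++ psiW G m (1/2) l)) ++ [g])
    by (unfold DB2; now rewrite <- !app_assoc).
  assert (Hgen : List.Forall (is_gen N) (psiWdag G m (1/2) l ++ psiW G m (1/2) l))
    by (apply Forall_app; split; [apply Forall_rev|]; apply is_gen_psiW; auto).
  eapply ser_agree_trans; [apply logProd_app|].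
  { apply Forall_app; split; [apply is_gen_Tkin|exact Hgen]. }
  { apply is_gen_Tkin. }
  eapply ser_agree_trans; [apply bch_agree; [apply logProd_app|apply ser_agree_refl]|].
  { apply is_gen_Tkin. } { exact Hgen. }
  eapply ser_agree_trans.
  { apply (bch_interpS N env _ _
      (bchL (gen1L (1/2) (LV 0)) (ser13L (LV 1) (LV 2))) (gen1L (1/2) (LV 0)));
      [apply bch_interpS|]; auto.
    eapply ser_agree_trans; [exact Hmid|apply (ser13_interpS N env (LV 1) (LV 2))]. }
  eapply ser_agree_trans; [apply drift_identity; auto|].
  intros k Hk x p HU. now destruct k as [|[|[|[|[|k]]]]]; try lia.
Qed.

End Composition.

(** * The third-order terms *)

Section Lsum.
Variable N : nat.

Lemma opbr_lsumF_l {A} f (l : list A) g : (forall a, In a l -> Smooth N (g a)) ->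
  agree N (opbr N (lsumF l g) f) (lsumF l (fun a => opbr N (g a) f)).
Proof.
  induction l as [|a l IH]; intros H x p HU.
  - apply poisson_zeror.
  - unfold opbr in *. unfold lsumF at 2. simpl.
    rewrite (poisson_agree N f f (lsumF (a :: l) g) (addF (g a) (lsumF l g)))
      by first [exact HU|apply agree_refl|intros y q _; reflexivity].
    rewrite poisson_addr; auto using smooth_lsumF with datatypes.
    unfold addF. rewrite IH; auto with datatypes.
Qed.

Lemma opbr_lsumF_r {A} f (l : list A) g : (forall a, In a l -> Smooth N (g a)) ->
  agree N (opbr N f (lsumF l g)) (lsumF l (fun a => opbr N f (g a))).
Proof.
  induction l as [|a l IH]; intros H x p HU.
  - apply poisson_zerol.
  - unfold opbr in *. unfold lsumF at 2. simpl.
    rewrite (poisson_agree N (lsumF (a :: l) g) (addF (g a) (lsumF l g)) f f)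
      by first [exact HU|apply agree_refl|intros y q _; reflexivity].
    rewrite poisson_addl; auto using smooth_lsumF with datatypes.
    unfold addF. rewrite IH; auto with datatypes.
Qed.

End Lsum.

Section ThirdOrder.
Variables (N : nat) (G : R) (m : nat -> R).

(* [tvv a b] is {{T, V_b}, V_a} and [vtt b] is {{V_b, T_b}, T_b}. *)
Definition tvv (a b : nat * nat) : Fun := opbr N (Vb G m a) (opbr N (Vb G m b) (Tkin N m)).
Definition vtt (b : nat * nat) : Fun := opbr N (Tb m b) (opbr N (Tb m b) (Vb G m b)).

Lemma opbr_Vb_Tkin b : pair_ok N b ->
  agree N (opbr N (Vb G m b) (Tb m b)) (opbr N (Vb G m b) (Tkin N m)).
Proof.
  intros Hb x p HU. unfold opbr.
  rewrite (poisson_agree N (Tkin N m) (addF (Tb m b) (Trest N m b)) (Vb G m b) (Vb G m b))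
    by first [exact HU|apply Tkin_split|apply agree_refl].
  rewrite poisson_addl; auto using smooth_Tb, smooth_Trest. unfold addF.
  fold (opbr N (Vb G m b) (Trest N m b)). rewrite opbr_Vb_Trest; auto. unfold zeroF; ring.
Qed.

Lemma tvv_local a b x p : pair_ok N b -> noCollision N x ->
  opbr N (Vb G m a) (opbr N (Vb G m b) (Tb m b)) x p = tvv a b x p.
Proof.
  intros Hb HU. exact (opbr_agree N _ _ _ _ (agree_refl N _) (opbr_Vb_Tkin b Hb) x p HU).
Qed.

Lemma tvv_comm a b x p : pair_ok N a -> pair_ok N b -> noCollision N x -> tvv a b x p = tvv b a x p.
Proof.
  intros Ha Hb HU. apply opbr_exchange; auto using smooth_Vb, smooth_Tkin.
  intros y q _. apply opbr_pos_only; now intros ? ? ?.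
Qed.

Lemma tvv_disjoint a b x p : pair_ok N a -> pair_ok N b -> disjoint_pairs b a -> noCollision N x ->
  tvv a b x p = 0.
Proof.
  intros Ha Hb Hab HU. rewrite <- tvv_local by auto.
  apply opbr_opbr_zero; auto using smooth_Vb, smooth_Tb.
  - intros y q _. apply opbr_pos_only; now intros ? ? ?.
  - intros y q HV. unfold opbr. rewrite poisson_anti.
    fold (opbr N (Tb m b) (Vb G m a)). rewrite opbr_Tb_Vb_disjoint; auto. unfold zeroF; ring.
Qed.

Lemma vtt_Tkin b x p : pair_ok N b -> noCollision N x ->
  opbr N (Tkin N m) (opbr N (Tkin N m) (Vb G m b)) x p = vtt b x p.
Proof.
  intros Hb HU.
  rewrite (opbr_agree N _ _ _ _ (Tkin_split N m b) (opbr_agree N _ _ _ _ (Tkin_split N m b)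
    (agree_refl N _))) by exact HU.
  apply opbr_add_commuting; auto using smooth_Tb, smooth_Trest, smooth_Vb, opbr_Trest_Vb.
  intros y q _. apply opbr_mom_only; now intros ? ? ?.
Qed.

Lemma smooth_Vb_in l : List.Forall (pair_ok N) l -> forall a, In a l -> Smooth N (Vb G m a).
Proof. intros Hl a Ha. apply smooth_Vb. eapply Forall_forall; eauto. Qed.

Lemma delta_DB_Vsum b l x p : pair_ok N b -> List.Forall (pair_ok N) l -> noCollision N x ->
  delta_DB N G m b (Vsum G m l) x p
  = -1/8 * lsum l (fun a => tvv a b x p) - 1/12 * tvv b b x p + 1/24 * vtt b x p.
Proof.
  intros Hb Hl HU. unfold delta_DB, addF, scaleF. rewrite tvv_local by auto. unfold vtt.
  change (Vsum G m l) with (lsumF l (Vb G m)).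
  rewrite opbr_lsumF_l by first [exact HU|exact (smooth_Vb_in l Hl)]. unfold lsumF.
  rewrite (lsum_ext l _ (fun a => tvv a b x p)) by (intros; apply tvv_local; auto). lra.
Qed.

Lemma delta_BD_Vsum b l x p : pair_ok N b -> List.Forall (pair_ok N) l -> noCollision N x ->
  delta_BD N G m b (Vsum G m l) x p = 1/24 * lsum l (fun a => tvv a b x p).
Proof.
  intros Hb Hl HU. unfold delta_BD, scaleF.
  change (Vsum G m l) with (lsumF l (Vb G m)).
  rewrite (opbr_agree N _ _ _ _ (agree_refl N _) (opbr_lsumF_r N (Tb m b) l (Vb G m)
    (smooth_Vb_in l Hl))) by exact HU.
  rewrite opbr_lsumF_r
    by first [exact HU|intros a Ha; apply smooth_opbr; [apply smooth_Tb|exact (smooth_Vb_in l Hl a Ha)]].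
  unfold lsumF. rewrite <- lsum_scal, <- lsum_scal. apply lsum_ext. intros a Ha.
  assert (Ha' : pair_ok N a) by (eapply Forall_forall; eauto).
  rewrite (opbr_agree N (Vb G m b) (Vb G m b) _ (scaleF (-1) (opbr N (Vb G m a) (Tb m b))))
    by first [exact HU|apply agree_refl|intros y q _; unfold scaleF, opbr; rewrite poisson_anti; ring].
  unfold opbr at 1. rewrite poisson_scalel. fold (opbr N (Vb G m b) (opbr N (Vb G m a) (Tb m b))).
  rewrite opbr_exchange, tvv_local by (auto using smooth_Vb, smooth_Tb;
    intros y q _; apply opbr_pos_only; now intros ? ? ?).
  lra.
Qed.

End ThirdOrder.

Section Values.
Variables (N : nat) (G : R) (m : nat -> R) (x p : Coord).
Hypothesis HU : noCollision N x.

Definition tvv_sum (l : list (nat * nat)) := lsum l (fun a => lsum l (fun b => tvv N G m a b x p)).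
Definition tvv_diag (l : list (nat * nat)) := lsum l (fun b => tvv N G m b b x p).
Definition vtt_sum (l : list (nat * nat)) := lsum l (fun b => vtt N G m b x p).

Lemma lsum_tvv_comm l b : pair_ok N b -> List.Forall (pair_ok N) l ->
  lsum l (fun a => tvv N G m b a x p) = lsum l (fun a => tvv N G m a b x p).
Proof.
  intros Hb Hl. apply lsum_ext. intros a Ha. apply tvv_comm; auto. eapply Forall_forall; eauto.
Qed.

Lemma tvv_sum_snoc l b : pair_ok N b -> List.Forall (pair_ok N) l ->
  tvv_sum (l ++ [b]) = tvv_sum l + 2 * lsum l (fun a => tvv N G m a b x p) + tvv N G m b b x p.
Proof.
  intros Hb Hl. unfold tvv_sum. rewrite lsum_app. simpl.
  rewrite (lsum_ext l (fun a => lsum (l ++ [b]) (fun c => tvv N G m a c x p))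
            (fun a => lsum l (fun c => tvv N G m a c x p) + tvv N G m a b x p))
    by (intros; rewrite lsum_app; simpl; ring).
  rewrite lsum_plus, lsum_app, lsum_tvv_comm by auto. simpl. ring.
Qed.

Lemma tvv_sum_cons l b : pair_ok N b -> List.Forall (pair_ok N) l ->
  tvv_sum (b :: l) = tvv_sum l + 2 * lsum l (fun a => tvv N G m a b x p) + tvv N G m b b x p.
Proof.
  intros Hb Hl. unfold tvv_sum. simpl.
  rewrite (lsum_ext l (fun a => tvv N G m a b x p + lsum l (fun c => tvv N G m a c x p))
            (fun a => lsum l (fun c => tvv N G m a c x p) + tvv N G m a b x p)) by (intros; ring).
  rewrite lsum_plus, lsum_tvv_comm by auto. ring.
Qed.

Lemma c3_DB_value l : List.Forall (pair_ok N) l ->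
  c3_DB N G m l x p = -1/16 * (tvv_sum l - tvv_diag l) - 1/12 * tvv_diag l + 1/24 * vtt_sum l.
Proof.
  induction l as [|b l IH] using rev_ind; intros Hl.
  - unfold c3_DB, tvv_sum, tvv_diag, vtt_sum. simpl. unfold zeroF. lra.
  - apply Forall_app in Hl. destruct Hl as [Hl Hb]. inversion Hb as [|? ? Hb' _]; subst.
    rewrite c3_DB_snoc. unfold addF. rewrite IH, delta_DB_Vsum, tvv_sum_snoc by auto.
    unfold tvv_diag, vtt_sum. rewrite !lsum_app. simpl. lra.
Qed.

Lemma c3_BD_value l : List.Forall (pair_ok N) l ->
  c3_BD N G m l x p = 1/48 * (tvv_sum l - tvv_diag l).
Proof.
  induction l as [|b l IH]; intros Hl.
  - unfold tvv_sum, tvv_diag. simpl. unfold zeroF. lra.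
  - inversion Hl as [|? ? Hb Hl']; subst. simpl. unfold addF.
    rewrite IH, delta_BD_Vsum, tvv_sum_cons by auto. unfold tvv_diag. simpl. lra.
Qed.

Lemma drift_terms_value l : List.Forall (pair_ok N) l ->
  1/12 * opbr N (Vsum G m l) (opbr N (Vsum G m l) (Tkin N m)) x p
  - 1/24 * opbr N (Tkin N m) (opbr N (Tkin N m) (Vsum G m l)) x p
  = 1/12 * tvv_sum l - 1/24 * vtt_sum l.
Proof.
  intros Hl. pose proof (smooth_Vb_in N G m l Hl) as HV. unfold Vsum.
  assert (HVT : forall a, In a l -> Smooth N (opbr N (Vb G m a) (Tkin N m)))
    by (intros; apply smooth_opbr; auto using smooth_Tkin).
  assert (HTV : forall a, In a l -> Smooth N (opbr N (Tkin N m) (Vb G m a)))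
    by (intros; apply smooth_opbr; auto using smooth_Tkin).
  rewrite opbr_lsumF_l by first [exact HU|exact HV].
  rewrite (opbr_agree N _ _ _ _ (agree_refl N _) (opbr_lsumF_r N (Tkin N m) l (Vb G m) HV)) by exact HU.
  rewrite opbr_lsumF_r by first [exact HU|exact HTV].
  unfold lsumF, tvv_sum, vtt_sum. f_equal; f_equal.
  - apply lsum_ext. intros a Ha. unfold tvv.
    rewrite (opbr_agree N _ _ _ _ (agree_refl N _) (opbr_lsumF_l N (Tkin N m) l (Vb G m) HV))
      by exact HU.
    rewrite opbr_lsumF_r by first [exact HU|exact HVT]. reflexivity.
  - apply lsum_ext. intros a Ha. apply vtt_Tkin; auto. eapply Forall_forall; eauto.
Qed.

End Values.

(** * Summing over pairs *)

Definition sum_pairs n (f : nat * nat -> R) := sumR n (fun j => sumR j (fun i => f (i, j))).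

Lemma sum_pairs_S n f : sum_pairs (S n) f = sum_pairs n f + sumR n (fun i => f (i, n)).
Proof. apply sumR_S. Qed.

Lemma sum_pairs_ext n f g : (forall a, f a = g a) -> sum_pairs n f = sum_pairs n g.
Proof. intros H. apply sumR_ext; intros; apply sumR_ext; intros; apply H. Qed.

Lemma sum_pairs_plus n f g : sum_pairs n (fun a => f a + g a) = sum_pairs n f + sum_pairs n g.
Proof. unfold sum_pairs. rewrite <- sumR_plus. apply sumR_ext; intros. apply sumR_plus. Qed.

Lemma sumR_ltb n g : sumR n (fun i => sumR n (fun j => if Nat.ltb i j then g i j else 0)) =
  sumR n (fun j => sumR j (fun i => g i j)).
Proof. rewrite sumR_swap. apply sumR_ext; intros j Hj. apply sumR_ltb_trunc. lia. Qed.

Lemma sumR_ltb3 n F : sumR n (fun i => sumR n (fun j => sumR n (fun k =>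
    if andb (Nat.ltb i j) (Nat.ltb j k) then F i j k else 0))) =
  sumR n (fun k => sumR k (fun j => sumR j (fun i => F i j k))).
Proof.
  transitivity (sumR n (fun i => sumR n (fun j =>
    if Nat.ltb i j then sumR n (fun k => if Nat.ltb j k then F i j k else 0) else 0))).
  { apply sumR_ext; intros i _; apply sumR_ext; intros j _.
    destruct (Nat.ltb i j); simpl; auto. apply sumR_zero; auto. }
  rewrite sumR_ltb.
  transitivity (sumR n (fun j => sumR n (fun k =>
    if Nat.ltb j k then sumR j (fun i => F i j k) else 0))).
  { apply sumR_ext; intros j _. rewrite sumR_swap. apply sumR_ext; intros k _.
    destruct (Nat.ltb j k); auto. apply sumR_zero; auto. }
  apply sumR_ltb.
Qed.

Lemma lsum_allPairs n f : lsum (allPairs n) f = sum_pairs n f.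
Proof.
  induction n; [reflexivity|].
  unfold allPairs. rewrite seq_S, flat_map_app. simpl. rewrite app_nil_r, lsum_app.
  fold (allPairs n). rewrite IHn, sum_pairs_S. f_equal.
  unfold sumR. induction (seq 0 n); simpl; congruence.
Qed.

Lemma in_allPairs n a : In a (allPairs n) -> (fst a < snd a < n)%nat.
Proof.
  unfold allPairs. intros H. apply in_flat_map in H. destruct H as [j [Hj Ha]].
  apply in_map_iff in Ha. destruct Ha as [i [<- Hi]]. apply in_seq in Hj, Hi. simpl. lia.
Qed.

Section OffDiagonal.
Variable n : nat.
Variable W : nat * nat -> nat * nat -> R.
Hypothesis W_sym : forall i j k l, (i < j < n)%nat -> (k < l < n)%nat ->
  W (i, j) (k, l) = W (k, l) (i, j).
Hypothesis W_disjoint : forall i j k l, (i < j < n)%nat -> (k < l < n)%nat ->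
  i <> k -> i <> l -> j <> k -> j <> l -> W (i, j) (k, l) = 0.

(* Only pairs sharing exactly one particle contribute; they are indexed by triples
   i < j < k. *)
Definition triple_sum n' := sumR n' (fun k => sumR k (fun j => sumR j (fun i =>
  W (i, k) (i, j) + W (i, j) (j, k) + W (j, k) (i, k)))).

Lemma sum_pairs_off_diagonal n' : (n' <= n)%nat ->
  sum_pairs n' (fun a => sum_pairs n' (fun b => W a b)) - sum_pairs n' (fun a => W a a)
  = 2 * triple_sum n'.
Proof.
  induction n' as [|n' IH]; intros Hn; [unfold sum_pairs, triple_sum, sumR; simpl; lra|].
  specialize (IH ltac:(lia)).
  set (X := sum_pairs n' (fun a => sumR n' (fun k => W a (k, n')))).
  set (Y := sumR n' (fun j => sumR j (fun i => W (i, j) (i, n') + W (i, j) (j, n')))).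
  set (Z := sumR n' (fun j => sumR j (fun i => W (i, n') (j, n')))).
  set (D := sumR n' (fun k => W (k, n') (k, n'))).
  assert (Hsplit : sum_pairs (S n') (fun a => sum_pairs (S n') (fun b => W a b)) =
     sum_pairs n' (fun a => sum_pairs n' (fun b => W a b)) + X
     + sumR n' (fun i => sum_pairs n' (fun b => W (i, n') b))
     + sumR n' (fun i => sumR n' (fun k => W (i, n') (k, n')))).
  { rewrite sum_pairs_S, (sum_pairs_ext n' _ (fun a => sum_pairs n' (fun b => W a b)
      + sumR n' (fun k => W a (k, n')))) by (intros; apply sum_pairs_S).
    rewrite sum_pairs_plus, (sumR_ext n' _ (fun i => sum_pairs n' (fun b => W (i, n') b)
      + sumR n' (fun k => W (i, n') (k, n')))) by (intros; apply sum_pairs_S).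
    rewrite sumR_plus. unfold X. ring. }
  assert (Hcross : sumR n' (fun i => sum_pairs n' (fun b => W (i, n') b)) = X).
  { unfold X, sum_pairs. rewrite sumR_swap. apply sumR_ext; intros j Hj.
    rewrite sumR_swap. apply sumR_ext; intros i Hi. apply sumR_ext; intros k Hk. apply W_sym; lia. }
  assert (HXY : X = Y).
  { unfold X, Y, sum_pairs. apply sumR_ext; intros j Hj. apply sumR_ext; intros i Hi.
    apply (sumR_two n' i j (fun k => W (i, j) (k, n'))); try lia.
    intros k Hk H1 H2. apply W_disjoint; lia. }
  assert (Hlast : sumR n' (fun i => sumR n' (fun k => W (i, n') (k, n'))) = D + 2 * Z).
  { rewrite sumR_square. unfold D, Z. rewrite <- sumR_scal, <- sumR_plus. apply sumR_ext; intros k Hk.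
    f_equal. rewrite <- sumR_scal. apply sumR_ext; intros i Hi. rewrite (W_sym k n' i n') by lia. ring. }
  assert (Htriple : triple_sum (S n') = triple_sum n' + (Y + Z)).
  { unfold triple_sum at 1. rewrite sumR_S. fold (triple_sum n'). f_equal. unfold Y, Z.
    rewrite <- sumR_plus. apply sumR_ext; intros j Hj. rewrite <- sumR_plus. apply sumR_ext; intros i Hi.
    rewrite (W_sym i n' i j), (W_sym j n' i n') by lia. ring. }
  rewrite Hsplit, sum_pairs_S, Htriple, Hcross, Hlast, HXY. fold D. lra.
Qed.

End OffDiagonal.

Section AllPairs.
Variables (N : nat) (G : R) (m : nat -> R).

Lemma pair_ok_of_perm ord : Permutation ord (allPairs N) -> List.Forall (pair_ok N) ord.
Proof.
  intros Hp. apply Forall_forall. intros b Hb.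
  apply (Permutation_in _ Hp), in_allPairs in Hb. unfold pair_ok. lia.
Qed.

Lemma Vpot_Vsum ord x p : Permutation ord (allPairs N) -> Vpot N G m x p = Vsum G m ord x p.
Proof.
  intros Hp. unfold Vsum, lsumF. rewrite (lsum_perm _ _ _ Hp), lsum_allPairs.
  apply (sumR_ltb N (fun i j => Vij G m i j x p)).
Qed.

Lemma Vij_sym i j : Vij G m j i = Vij G m i j.
Proof.
  apply functional_extensionality; intro x; apply functional_extensionality; intro p.
  unfold Vij. rewrite (sumR_ext 3 (fun a => (x j a - x i a) ^ 2) (fun a => (x i a - x j a) ^ 2))
    by (intros; ring).
  unfold Rdiv. ring.
Qed.

(* The paper's {{T,V_ij},V_ik} is [tvv (i,k) (i,j)], up to the orientation of the pairs. *)
Lemma TVV3_tvv x p : noCollision N x ->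
  TVV3 N G m x p = sum_pairs N (fun a => sum_pairs N (fun b => tvv N G m a b x p))
                   - sum_pairs N (fun a => tvv N G m a a x p).
Proof.
  intros HU. rewrite (sum_pairs_off_diagonal N (fun a b => tvv N G m a b x p)); auto.
  - unfold TVV3. cbv zeta. f_equal. rewrite sumR_ltb3. unfold triple_sum.
    apply sumR_ext; intros k Hk; apply sumR_ext; intros j Hj; apply sumR_ext; intros i Hi.
    unfold tvv, opbr. rewrite (Vij_sym i j), (Vij_sym i k), (Vij_sym j k). reflexivity.
  - intros i j k l H1 H2. apply tvv_comm; auto; unfold pair_ok; simpl; lia.
  - intros i j k l H1 H2 H3 H4 H5 H6.
    apply tvv_disjoint; auto; unfold pair_ok, disjoint_pairs; simpl; lia.
Qed.

Lemma tvv_sum_minus_diag ord x p : noCollision N x -> Permutation ord (allPairs N) ->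
  tvv_sum N G m x p ord - tvv_diag N G m x p ord = TVV3 N G m x p.
Proof.
  intros HU Hp. rewrite TVV3_tvv by auto. unfold tvv_sum, tvv_diag.
  rewrite !(lsum_perm _ _ _ Hp), !lsum_allPairs. f_equal.
  apply sum_pairs_ext. intros a. now rewrite (lsum_perm _ _ _ Hp), lsum_allPairs.
Qed.

End AllPairs.

Theorem mainTheorem1 :
  forall (N : nat) (G : R) (m : nat -> R) (ord : list (nat * nat)),
    0 < G ->
    (forall i, (i < N)%nat -> 0 < m i) ->
    Permutation ord (allPairs N) ->
    forall (k : nat) (x p : Coord),
      (1 <= k <= 4)%nat ->
      noCollision N x ->
      logProd N (DB2 N G m ord) k x p = target N G m k x p /\
      logProd N (BD2 N G m ord) k x p = target N G m k x p.
Proof.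
  intros N G m ord _ _ Hp k x p Hk HU.
  pose proof (pair_ok_of_perm N ord Hp) as Hv.
  rewrite (logProd_DB N G m ord Hv k Hk x p HU), (proj1 (logProd_BD N G m ord Hv) k Hk x p HU).
  destruct k as [|[|[|[|[|k]]]]]; try lia; cbn [ser13]; unfold target; cbn [Nat.eqb].
  - unfold addF. rewrite (Vpot_Vsum N G m ord x p Hp). split; reflexivity.
  - split; reflexivity.
  - pose proof (drift_terms_value N G m x p HU ord Hv).
    pose proof (tvv_sum_minus_diag N G m ord x p HU Hp).
    unfold addF, scaleF. rewrite c3_DB_value, c3_BD_value by auto. split; lra.
  - split; reflexivity.
Qed.
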